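(* In the standing setup, let $y_0\in P$ and let $J$ be a $q$-periodic interval of $F_{y_0}$ with midpoint $c$; let $X^*=\{T_0^k(c,y_0)\}_{k=0}^{q-1}$ be the corresponding symmetric periodic orbit of $T_0$. Let $\gamma_A,\gamma_B$ each be one of the curves $y\mapsto(0,y)$, $y\mapsto(\tfrac12,y)$ (type $0$) or $y\mapsto(m_i(y),y)$ for some $i$ (type $-1$), and let $n_A,n_B\ge 0$ be integers; set $j_A=2n_A$ if $\gamma_A$ is of type $0$ and $j_A=2n_A-1$ if of type $-1$, and similarly $j_B$, and assume $|j_A-j_B|=q$. Suppose there are $y_A,y_B\in P$ with $T_0^{n_A}(\gamma_A(y_A))=T_0^{n_B}(\gamma_B(y_B))=p^*\in X^*$; that for $0\le k<n_A$ the index of the elemental subinterval containing the $x$-coordinate of $T_\varepsilon^k(\gamma_A(y))$ is locally constant in $(y,\varepsilon)$ near $(y_A,0)$, and similarly for $B$ near $(y_B,0)$; and that the tangent vectors $\frac{d}{dy}T_0^{n_A}(\gamma_A(y))|_{y=y_A}$ and $\frac{d}{dy}T_0^{n_B}(\gamma_B(y))|_{y=y_B}$ are linearly independent. Then there exist $\varepsilon_0>0$ and a neighborhood $U$ of $p^*$ such that for all $|\varepsilon|<\varepsilon_0$ the curves $y\mapsto T_\varepsilon^{n_A}(\gamma_A(y))$ and $y\mapsto T_\varepsilon^{n_B}(\gamma_B(y))$ (for $y$ near $y_A$, resp. $y_B$) intersect in $U$ in exactly one point $p_\varepsilon$; $p_\varepsilon$ depends continuously on $\varepsilon$ with $p_0=p^*$,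 and $p_\varepsilon$ lies on a symmetric periodic orbit of $T_\varepsilon$ of minimal period $q$.
   Context: Standing setup (perturbed symmetric FIEM): identify $[0,1)$ with $\mathbb{S}^1=\mathbb{R}/\mathbb{Z}$. Fix $d\ge 2$ and an open interval $P\subset\mathbb{R}$. For $y\in P$ let $\lambda(y)=(\lambda_1(y),\dots,\lambda_d(y))$ with $\lambda_i(y)>0$, $\sum_i\lambda_i(y)=1$, each $\lambda_i$ smooth. Put $a_i(y)=\sum_{j<i}\lambda_j(y)$, elemental subintervals $J_i(y)=[a_i(y),a_i(y)+\lambda_i(y))$, midpoints $m_i(y)=a_i(y)+\lambda_i(y)/2$, and $\omega_i(y)=\sum_{j>i}\lambda_j(y)-\sum_{j<i}\lambda_j(y)$ (so $m_i=(1-\omega_i)/2$). The symmetric $d$-IEM is $F_y(x)=x+\omega_i(y)$ for $x\in J_i(y)$. Let $R(x)=-x\bmod 1$ and let $f$ be a smooth $1$-periodic odd function. For $\varepsilon\in\mathbb{R}$, $T_\varepsilon(x,y)=(F_y(x),\,y+\varepsilon f(F_y(x)))$ on $\mathbb{S}^1\times P$ (where defined), $S_\varepsilon(x,y)=(R(x),\,y-\varepsilon f(x))$, and the symmetry lines are $\Gamma_i=\{p: T_\varepsilon^i(S_\varepsilon(p))=p\}$. A $q$-periodic interval of an IEM $F$ is a left-closed right-open interval $J$ such that $q$ is the least positive integer with $F^q(J)=J$, each $F^k(J)$ lies in a single elemental subinterval, and $J$ is maximal with these properties. A periodic orbit $\mathcal{O}$ of $T_\varepsilon$ is symmetric if $S_\varepsilon(\mathcal{O})=\mathcal{O}$.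 *)

From Stdlib Require Import Reals Lra ZArith.
From Coquelicot Require Import Coquelicot.
Open Scope R_scope.

(* Points of S^1 x P are pairs (x,y) of reals; the x-coordinate is always
   represented in [0,1) (all maps below land in [0,1) in the x-coordinate). *)

Definition inP (pa pb : Rbar) (y : R) : Prop := Rbar_lt pa y /\ Rbar_lt y pb.

Fixpoint psum (g : nat -> R) (n : nat) : R :=
  match n with O => 0 | S n' => psum g n' + g n' end.

Section IEM.
Variable d : nat.
Variable lambda : nat -> R -> R.   (* lambda i y, for i = 0 .. d-1 *)

Definition a_ (i : nat) (y : R) : R := psum (fun j => lambda j y) i.
Definition m_ (i : nat) (y : R) : R := a_ i y + lambda i y / 2.
Definition omega_ (i : nat) (y : R) : R :=
  (psum (fun j => lambda j y) d - psum (fun j => lambda j y) (S i)) - a_ i y.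

Definition inJ (i : nat) (y x : R) : Prop := a_ i y <= x < a_ i y + lambda i y.

Definition inJb (i : nat) (y x : R) : bool :=
  if Rle_dec (a_ i y) x then
    if Rlt_dec x (a_ i y + lambda i y) then true else false
  else false.

(* The symmetric d-IEM F_y(x) = x + omega_i(y) for x in J_i(y), read on
   the circle R/Z (input and output reduced to [0,1)). *)
Definition F (y x : R) : R :=
  let x' := frac_part x in
  frac_part (x' + psum (fun i => if inJb i y x' then omega_ i y else 0) d).

Definition T (f : R -> R) (eps : R) (p : R * R) : R * R :=
  let x1 := F (snd p) (fst p) in (x1, snd p + eps * f x1).

Definition Ssym (f : R -> R) (eps : R) (p : R * R) : R * R :=
  (frac_part (- fst p), snd p - eps * f (fst p)).

Definition in_elem (i : nat) (p : R * R) : Prop := (i < d)%nat /\ inJ i (snd p) (fst p).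

Definition inI (l r x : R) : Prop := l <= x < r.

Definition periodic_interval_props (y : R) (q : nat) (l r : R) : Prop :=
  l < r /\ (0 < q)%nat /\
  (forall z, inI l r z <-> exists x, inI l r x /\ Nat.iter q (F y) x = z) /\
  (forall k, (0 < k < q)%nat ->
     ~ (forall z, inI l r z <-> exists x, inI l r x /\ Nat.iter k (F y) x = z)) /\
  (forall k, exists i, (i < d)%nat /\
     forall x, inI l r x -> inJ i y (Nat.iter k (F y) x)).

Definition periodic_interval (y : R) (q : nat) (l r : R) : Prop :=
  periodic_interval_props y q l r /\
  (forall l' r', l' <= l -> r <= r' -> periodic_interval_props y q l' r' ->
     l' = l /\ r' = r).

End IEM.

(* Curves: type 0 : y |-> (0,y), y |-> (1/2,y); type -1 : y |-> (m_i(y), y). *)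
Inductive curve : Set := cur_zero | cur_half | cur_mid (i : nat).

Definition valid_curve (d : nat) (c : curve) : Prop :=
  match c with cur_mid i => (i < d)%nat | _ => True end.

Definition gamma (lambda : nat -> R -> R) (c : curve) (y : R) : R * R :=
  match c with
  | cur_zero => (0, y)
  | cur_half => (1/2, y)
  | cur_mid i => (m_ lambda i y, y)
  end.

Definition jval (c : curve) (n : nat) : Z :=
  match c with
  | cur_mid _ => (2 * Z.of_nat n - 1)%Z
  | _ => (2 * Z.of_nat n)%Z
  end.

Definition smooth_on (P : R -> Prop) (g : R -> R) : Prop :=
  forall n y, P y -> ex_derive_n g n y.

Definition sym_periodic_orbit (Tm Sm : R * R -> R * R) (P : R -> Prop)
  (q : nat) (p : R * R) : Prop :=
  (0 < q)%nat /\ Nat.iter q Tm p = p /\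
  (forall k, (0 < k < q)%nat -> Nat.iter k Tm p <> p) /\
  (forall k, P (snd (Nat.iter k Tm p))) /\
  (forall k, exists j, Sm (Nat.iter k Tm p) = Nat.iter j Tm p) /\
  (forall k, exists j, Nat.iter k Tm p = Sm (Nat.iter j Tm p)).

From Stdlib Require Import Reals Lra Lia ZArith IndefiniteDescription.
From Coquelicot Require Import Coquelicot.
Open Scope R_scope.

(** For [e = 0] the map [T_0] preserves heights, and as long as the iterates of a curve
    follow a fixed itinerary of elemental subintervals, [T_e^n (gamma y)] is an explicit
    map that is C^1 in [y] and jointly continuous in [(y, e)]. Near the base point this is
    the case, because the orbit of the midpoint of a periodic interval stays strictly
    inside the elemental subintervals. The two image curves cross transversally at
    [p*] (their heights have slope 1, their [x]-slopes differ), so for small [e] they still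
    meet in a unique nearby point [p_e], found as the root of the horizontal gap between
    the curves at equal heights, which depends continuously on [e].

    Each curve is a symmetry line: [S_e] fixes [gamma y] (type 0) or maps it to
    [T_e (gamma y)] (type -1). With reversibility [T_e S_e T_e = S_e] this gives
    [T_e^(j+1) (S_e p_e) = T_e p_e] for both curves; as [j_A] and [j_B] differ by [q], the
    point [p_e] is [q]-periodic and its orbit is [S_e]-invariant. Minimality of the period
    and the interiority used for reversibility persist from [e = 0] by continuity. *)

(** * Interval exchange maps *)

Section IEM.
Variables (d : nat) (lambda : nat -> R -> R) (pa pb : Rbar).
Hypothesis lambda_pos : forall i y, (i < d)%nat -> inP pa pb y -> 0 < lambda i y.
Hypothesis lambda_sum : forall y, inP pa pb y -> psum (fun i => lambda i y) d = 1.

Lemma dim_pos y : inP pa pb y -> (0 < d)%nat.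
Proof.
  intros Py. destruct d as [|d']; [|lia]. pose proof (lambda_sum y Py). simpl in H. lra.
Qed.

Lemma a_S i y : a_ lambda (S i) y = a_ lambda i y + lambda i y.
Proof. reflexivity. Qed.

Lemma a_le y n m : inP pa pb y -> (n <= m <= d)%nat -> a_ lambda n y <= a_ lambda m y.
Proof.
  intros Py Hnm. induction m as [|m IH].
  - replace n with 0%nat by lia. lra.
  - destruct (Nat.eq_dec n (S m)) as [->|Hne]; [lra|].
    rewrite a_S. assert (0 < lambda m y) by (apply lambda_pos; auto; lia).
    assert (a_ lambda n y <= a_ lambda m y) by (apply IH; lia). lra.
Qed.

Lemma omega_formula y i : inP pa pb y ->
  omega_ d lambda i y = 1 - 2 * a_ lambda i y - lambda i y.
Proof.
  intros Py. unfold omega_. rewrite lambda_sum by auto.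
  change (psum (fun j => lambda j y) (S i)) with (a_ lambda (S i) y).
  rewrite a_S. lra.
Qed.

Lemma J_bounds y i : inP pa pb y -> (i < d)%nat ->
  0 <= a_ lambda i y /\ a_ lambda i y + lambda i y <= 1 /\ 0 < lambda i y.
Proof.
  intros Py Hi. split; [|split].
  - change 0 with (a_ lambda 0 y). apply a_le; auto; lia.
  - rewrite <- a_S, <- (lambda_sum y Py). apply a_le; auto; lia.
  - apply lambda_pos; auto.
Qed.

Lemma J_unique y i j x : inP pa pb y -> (i < d)%nat -> (j < d)%nat ->
  inJ lambda i y x -> inJ lambda j y x -> i = j.
Proof.
  intros Py Hi Hj [H1 H2] [H3 H4].
  destruct (Nat.lt_trichotomy i j) as [Hlt|[Heq|Hlt]]; auto.
  - assert (a_ lambda (S i) y <= a_ lambda j y) by (apply a_le; auto; lia).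
    rewrite a_S in H. lra.
  - assert (a_ lambda (S j) y <= a_ lambda i y) by (apply a_le; auto; lia).
    rewrite a_S in H. lra.
Qed.

Lemma J_cover y x : inP pa pb y -> 0 <= x < 1 ->
  exists i, (i < d)%nat /\ inJ lambda i y x.
Proof.
  intros Py Hx.
  assert (Hn : forall n, (n <= d)%nat -> x < a_ lambda n y ->
            exists i, (i < n)%nat /\ inJ lambda i y x).
  { induction n as [|n IH]; intros Hn Hlt; [change (a_ lambda 0 y) with 0 in Hlt; lra|].
    destruct (Rlt_dec x (a_ lambda n y)) as [Hl|Hl].
    - destruct (IH ltac:(lia) Hl) as [i [Hi HJ]]. exists i; split; auto; lia.
    - exists n; split; [lia|]. rewrite a_S in Hlt. unfold inJ; lra. }
  destruct (Hn d (Nat.le_refl _)) as [i [Hi HJ]]; [unfold a_; rewrite lambda_sum by auto; lra|].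
  exists i; auto.
Qed.

Lemma inJb_iff i y x : inJb lambda i y x = true <-> inJ lambda i y x.
Proof.
  unfold inJb, inJ.
  destruct (Rle_dec (a_ lambda i y) x); [destruct (Rlt_dec x (a_ lambda i y + lambda i y))|];
    split; intros; try lra; try discriminate; auto.
Qed.

Lemma psum_translation_on_J y i x n : inP pa pb y -> (i < d)%nat -> inJ lambda i y x ->
  (n <= d)%nat ->
  psum (fun j => if inJb lambda j y x then omega_ d lambda j y else 0) n =
  if Nat.ltb i n then omega_ d lambda i y else 0.
Proof.
  intros Py Hi HJ. induction n as [|n IH]; intros Hn; [reflexivity|].
  simpl psum. rewrite IH by lia.
  destruct (Nat.eq_dec n i) as [->|Hne].
  - rewrite (proj2 (inJb_iff i y x) HJ).
    destruct (Nat.ltb_spec i i); [lia|]. destruct (Nat.ltb_spec i (S i)); [lra|lia].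
  - assert (Hb : inJb lambda n y x = false).
    { destruct (inJb lambda n y x) eqn:E; auto. apply inJb_iff in E.
      exfalso; apply Hne; eapply J_unique; eauto; lia. }
    rewrite Hb. destruct (Nat.ltb_spec i n); destruct (Nat.ltb_spec i (S n)); try lia; lra.
Qed.

Lemma frac_part_id x : 0 <= x < 1 -> frac_part x = x.
Proof.
  intros Hx. symmetry. apply (Int_part_frac_part_spec x 0 x Hx). simpl; lra.
Qed.

Lemma frac_part_opp x : 0 < x < 1 -> frac_part (- x) = 1 - x.
Proof.
  intros Hx. symmetry. apply (Int_part_frac_part_spec (- x) (-1) (1 - x)); [lra|simpl; lra].
Qed.

Lemma F_on_J y i x : inP pa pb y -> (i < d)%nat -> inJ lambda i y x ->
  F d lambda y x = x + omega_ d lambda i y.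
Proof.
  intros Py Hi HJ. pose proof (J_bounds y i Py Hi) as [B1 [B2 B3]].
  pose proof HJ as [H1 H2].
  unfold F. rewrite (frac_part_id x) by lra.
  rewrite (psum_translation_on_J y i x d) by auto.
  destruct (Nat.ltb_spec i d); [|lia].
  rewrite omega_formula by auto. apply frac_part_id. lra.
Qed.

Lemma F_range y x : 0 <= F d lambda y x < 1.
Proof. unfold F. destruct (base_fp (frac_part x + psum
  (fun i => if inJb lambda i y (frac_part x) then omega_ d lambda i y else 0) d)). lra.
Qed.

Lemma F_inj y x x' : inP pa pb y -> 0 <= x < 1 -> 0 <= x' < 1 ->
  F d lambda y x = F d lambda y x' -> x = x'.
Proof.
  intros Py Hx Hx' E.
  destruct (J_cover y x Py Hx) as [i [Hi [H1 H2]]].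
  destruct (J_cover y x' Py Hx') as [j [Hj [H3 H4]]].
  rewrite (F_on_J y i x), (F_on_J y j x'), !omega_formula in E by (auto; split; auto).
  destruct (Nat.lt_trichotomy i j) as [Hlt|[->|Hlt]].
  - assert (a_ lambda (S i) y <= a_ lambda j y) by (apply a_le; auto; lia).
    rewrite a_S in H. lra.
  - lra.
  - assert (a_ lambda (S j) y <= a_ lambda i y) by (apply a_le; auto; lia).
    rewrite a_S in H. lra.
Qed.

Lemma F_iter_range y x k : 0 <= x < 1 -> 0 <= Nat.iter k (F d lambda y) x < 1.
Proof. intros; destruct k; simpl; auto; apply F_range. Qed.

Lemma F_iter_inj y k x x' : inP pa pb y -> 0 <= x < 1 -> 0 <= x' < 1 ->
  Nat.iter k (F d lambda y) x = Nat.iter k (F d lambda y) x' -> x = x'.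
Proof.
  intros Py Hx Hx'. induction k as [|k IH]; simpl; auto.
  intros E. apply IH. apply F_inj in E; auto; apply F_iter_range; auto.
Qed.

End IEM.

(** * Reversibility and symmetry lines *)

Lemma iter_period_mul {A} (g : A -> A) x q N :
  Nat.iter q g x = x -> Nat.iter (N * q) g x = x.
Proof.
  intros H. induction N as [|N IH]; [reflexivity|].
  replace (S N * q)%nat with (q + N * q)%nat by lia. rewrite Nat.iter_add, IH; auto.
Qed.

Lemma iter_mod_period {A} (g : A -> A) p q k : (0 < q)%nat -> Nat.iter q g p = p ->
  Nat.iter k g p = Nat.iter (k mod q) g p.
Proof.
  intros Hq E. transitivity (Nat.iter (k mod q + k / q * q) g p).
  - f_equal. pose proof (Nat.div_mod_eq k q). lia.
  - rewrite Nat.iter_add, iter_period_mul; auto.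
Qed.

Lemma reversible_iter {A} (Tm Sm : A -> A) z n :
  (forall m, (m < n)%nat -> Tm (Sm (Tm (Nat.iter m Tm z))) = Sm (Nat.iter m Tm z)) ->
  Nat.iter n Tm (Sm (Nat.iter n Tm z)) = Sm z.
Proof.
  induction n as [|n IH]; intros H; [reflexivity|].
  rewrite Nat.iter_succ_r, (Nat.iter_succ n), H by lia. apply IH. intros; apply H; lia.
Qed.

Lemma reversible_periodic_orbit_symmetric {A} (Tm Sm : A -> A) p q a :
  (0 < q)%nat -> Nat.iter q Tm p = p ->
  (forall k, (k < q)%nat -> Tm (Sm (Tm (Nat.iter k Tm p))) = Sm (Nat.iter k Tm p)) ->
  Nat.iter a Tm (Sm p) = Tm p ->
  forall k, exists j, Sm (Nat.iter k Tm p) = Nat.iter j Tm p.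
Proof.
  intros Hq Ep HT Ea.
  assert (Hback : forall k, (k <= q)%nat ->
            Sm (Nat.iter k Tm p) = Nat.iter (q - k) Tm (Sm p)).
  { intros k Hk. symmetry.
    transitivity (Nat.iter (q - k) Tm (Sm (Nat.iter (q - k) Tm (Nat.iter k Tm p)))).
    - rewrite <- Nat.iter_add. replace (q - k + k)%nat with q by lia. rewrite Ep. reflexivity.
    - apply reversible_iter. intros m Hm. rewrite <- Nat.iter_add. apply HT. lia. }
  assert (Sq : Nat.iter q Tm (Sm p) = Sm p).
  { pose proof (Hback 0%nat ltac:(lia)) as H0. rewrite Nat.sub_0_r in H0. auto. }
  assert (Sp : Sm p = Nat.iter (a * q - a + 1) Tm p).
  { rewrite Nat.add_1_r, Nat.iter_succ_r, <- Ea, <- Nat.iter_add.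
    replace (a * q - a + a)%nat with (a * q)%nat by nia.
    symmetry. apply iter_period_mul; auto. }
  intros k. rewrite (iter_mod_period Tm p q k Hq Ep).
  pose proof (Nat.mod_upper_bound k q ltac:(lia)).
  rewrite Hback, Sp, <- Nat.iter_add by lia. eexists; reflexivity.
Qed.

Definition reflection_time (c : curve) (n : nat) : nat :=
  match c with cur_mid _ => (2 * n)%nat | _ => (2 * n + 1)%nat end.

Lemma reflection_time_jval c n : Z.of_nat (reflection_time c n) = (jval c n + 1)%Z.
Proof. destruct c; unfold reflection_time, jval; lia. Qed.

Lemma iter_two_returns {A} (Tm : A -> A) s p a q :
  Nat.iter a Tm s = Tm p -> Nat.iter (q + a) Tm s = Tm p -> Tm (Nat.iter q Tm p) = Tm p.
Proof. intros Ea Eqa. rewrite Nat.iter_add, Ea, <- Nat.iter_succ_r in Eqa. exact Eqa. Qed.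

Section Reversibility.
Variables (d : nat) (lambda : nat -> R -> R) (pa pb : Rbar) (f : R -> R).
Hypothesis lambda_pos : forall i y, (i < d)%nat -> inP pa pb y -> 0 < lambda i y.
Hypothesis lambda_sum : forall y, inP pa pb y -> psum (fun i => lambda i y) d = 1.
Hypothesis f_periodic : forall x, f (x + 1) = f x.
Hypothesis f_odd : forall x, f (- x) = - f x.

Definition interior_pt (p : R * R) : Prop := exists i, (i < d)%nat /\ inP pa pb (snd p) /\
  a_ lambda i (snd p) < fst p < a_ lambda i (snd p) + lambda i (snd p).

Lemma f_zero : f 0 = 0.
Proof. pose proof (f_odd 0). rewrite Ropp_0 in H. lra. Qed.

Lemma f_half : f (1/2) = 0.
Proof.
  pose proof (f_odd (1/2)). pose proof (f_periodic (-(1/2))).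
  replace (-(1/2) + 1) with (1/2) in H0 by lra. lra.
Qed.

Lemma f_one_sub x : f (1 - x) = - f x.
Proof. rewrite <- f_odd, <- (f_periodic (- x)). f_equal. ring. Qed.

Lemma interior_pt_range p : interior_pt p -> 0 < fst p < 1.
Proof.
  intros [i [Hi [Py H]]].
  destruct (J_bounds d lambda pa pb lambda_pos lambda_sum (snd p) i Py Hi). lra.
Qed.

Lemma T_on_J e x y i : (i < d)%nat -> inP pa pb y -> inJ lambda i y x ->
  T d lambda f e (x, y) = (x + omega_ d lambda i y, y + e * f (x + omega_ d lambda i y)).
Proof.
  intros. unfold T; simpl. rewrite (F_on_J d lambda pa pb lambda_pos lambda_sum y i x); auto.
Qed.

Lemma T_reversible e p : interior_pt p ->
  T d lambda f e (Ssym f e (T d lambda f e p)) = Ssym f e p.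
Proof.
  intros Hp. pose proof (interior_pt_range p Hp) as Hr.
  destruct p as [x y]. destruct Hp as [i [Hi [Py H]]]. simpl in *.
  destruct (J_bounds d lambda pa pb lambda_pos lambda_sum y i Py Hi) as [B1 [B2 B3]].
  rewrite (T_on_J e x y i), (omega_formula d lambda pa pb) by (auto; unfold inJ; lra).
  unfold Ssym; simpl. rewrite frac_part_opp by lra.
  set (x1 := x + (1 - 2 * a_ lambda i y - lambda i y)).
  replace (y + e * f x1 - e * f x1) with y by ring.
  rewrite (T_on_J e _ _ i), (omega_formula d lambda pa pb) by (auto; unfold inJ, x1; lra).
  rewrite frac_part_opp by (unfold x1; lra). unfold x1.
  replace (1 - (x + (1 - 2 * a_ lambda i y - lambda i y)) + (1 - 2 * a_ lambda i y - lambda i y))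
    with (1 - x) by ring.
  rewrite f_one_sub. f_equal. ring.
Qed.

Lemma Ssym_involutive e p : 0 <= fst p < 1 -> Ssym f e (Ssym f e p) = p.
Proof.
  destruct p as [x y]; simpl. intros Hx. unfold Ssym; simpl.
  destruct (Req_dec x 0) as [->|Hne].
  - rewrite Ropp_0, fp_R0, f_zero, Ropp_0, fp_R0. f_equal; ring.
  - rewrite (frac_part_opp x) by lra. rewrite Ropp_minus_distr.
    replace (x - 1) with (- (1 - x)) by ring. rewrite frac_part_opp, f_one_sub by lra.
    f_equal; ring.
Qed.

Lemma Ssym_zero e y : Ssym f e (0, y) = (0, y).
Proof. unfold Ssym; simpl. rewrite Ropp_0, fp_R0, f_zero. f_equal; ring. Qed.

Lemma Ssym_half e y : Ssym f e (1/2, y) = (1/2, y).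
Proof. unfold Ssym; simpl. rewrite frac_part_opp, f_half by lra. f_equal; [lra|ring]. Qed.

Lemma Ssym_mid e y i : (i < d)%nat -> inP pa pb y ->
  Ssym f e (m_ lambda i y, y) = T d lambda f e (m_ lambda i y, y).
Proof.
  intros Hi Py.
  destruct (J_bounds d lambda pa pb lambda_pos lambda_sum y i Py Hi) as [B1 [B2 B3]].
  rewrite (T_on_J e _ _ i), (omega_formula d lambda pa pb) by (auto; unfold inJ, m_; lra).
  unfold Ssym, m_; simpl. rewrite frac_part_opp by lra.
  replace (a_ lambda i y + lambda i y / 2 + (1 - 2 * a_ lambda i y - lambda i y))
    with (1 - (a_ lambda i y + lambda i y / 2)) by field.
  rewrite f_one_sub. f_equal; try field; ring.
Qed.

Lemma T_inj e p p' : 0 <= fst p < 1 -> 0 <= fst p' < 1 -> inP pa pb (snd p) ->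
  T d lambda f e p = T d lambda f e p' -> p = p'.
Proof.
  destruct p as [x y], p' as [x' y']; simpl. intros Hx Hx' Py E.
  unfold T in E; simpl in E. injection E as E1 E2.
  rewrite E1 in E2. assert (y = y') by lra. subst y'.
  f_equal. apply (F_inj d lambda pa pb lambda_pos lambda_sum y); auto.
Qed.

Lemma T0_iter k x y : Nat.iter k (T d lambda f 0) (x, y) = (Nat.iter k (F d lambda y) x, y).
Proof.
  induction k as [|k IH]; [reflexivity|]. simpl. rewrite IH. unfold T; simpl. f_equal; ring.
Qed.

Lemma curve_reflection (c : curve) (n : nat) (e y : R) : valid_curve d c -> inP pa pb y ->
  (forall m, (m < n)%nat -> interior_pt (Nat.iter m (T d lambda f e) (gamma lambda c y))) ->
  let p := Nat.iter n (T d lambda f e) (gamma lambda c y) in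
  Nat.iter (reflection_time c n) (T d lambda f e) (Ssym f e p) = T d lambda f e p.
Proof.
  intros Hv Py Hint p.
  assert (Hrev := reversible_iter (T d lambda f e) (Ssym f e) (gamma lambda c y) n
     (fun m Hm => T_reversible e _ (Hint m Hm))).
  fold p in Hrev.
  destruct c as [| |i]; unfold reflection_time.
  - replace (2 * n + 1)%nat with ((n + 1) + n)%nat by lia.
    rewrite Nat.iter_add, Hrev. simpl gamma. rewrite Ssym_zero, Nat.add_comm. reflexivity.
  - replace (2 * n + 1)%nat with ((n + 1) + n)%nat by lia.
    rewrite Nat.iter_add, Hrev. simpl gamma. rewrite Ssym_half, Nat.add_comm. reflexivity.
  - replace (2 * n)%nat with (n + n)%nat by lia.
    rewrite Nat.iter_add, Hrev. simpl gamma. rewrite Ssym_mid by auto.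
    apply Nat.iter_swap.
Qed.

(* Two reflection relations whose times differ by [q] force [T^q p = p]; reversibility
   then makes the reflection of the orbit a part of the orbit. *)
Lemma sym_periodic_orbit_of_reflections e p q a b :
  (0 < q)%nat -> (a = q + b \/ b = q + a)%nat ->
  (forall k, (k <= q)%nat -> interior_pt (Nat.iter k (T d lambda f e) p)) ->
  (forall k, (0 < k < q)%nat -> Nat.iter k (T d lambda f e) p <> p) ->
  Nat.iter a (T d lambda f e) (Ssym f e p) = T d lambda f e p ->
  Nat.iter b (T d lambda f e) (Ssym f e p) = T d lambda f e p ->
  sym_periodic_orbit (T d lambda f e) (Ssym f e) (inP pa pb) q p.
Proof.
  intros Hq Hab Hint Hdist Ea Eb.
  set (Te := T d lambda f e).
  assert (Hrange : forall k, (k <= q)%nat ->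
            0 <= fst (Nat.iter k Te p) < 1 /\ inP pa pb (snd (Nat.iter k Te p))).
  { intros k Hk. pose proof (interior_pt_range _ (Hint k Hk)) as Hr. fold Te in Hr.
    destruct (Hint k Hk) as [i [_ [HP _]]]. split; [lra|auto]. }
  assert (Hper : Nat.iter q Te p = p).
  { assert (E : Te (Nat.iter q Te p) = Te p).
    { destruct Hab as [->| ->];
        [apply (iter_two_returns Te (Ssym f e p) p b)|apply (iter_two_returns Te (Ssym f e p) p a)];
        auto. }
    destruct (Hrange q (le_n _)) as [R1 R2]. destruct (Hrange 0%nat ltac:(lia)) as [R3 _].
    apply (T_inj e); auto. }
  assert (Hmod : forall k, 0 <= fst (Nat.iter k Te p) < 1 /\ inP pa pb (snd (Nat.iter k Te p))).
  { intros k. rewrite (iter_mod_period Te p q k Hq Hper). apply Hrange.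
    pose proof (Nat.mod_upper_bound k q); lia. }
  assert (Hsym : forall k, exists j, Ssym f e (Nat.iter k Te p) = Nat.iter j Te p).
  { apply (reversible_periodic_orbit_symmetric Te (Ssym f e) p q a); auto.
    intros k Hk. apply T_reversible, Hint. lia. }
  split; [auto|]. split; [auto|]. split; [auto|]. split; [intros k; apply Hmod|].
  split; [auto|].
  intros k. destruct (Hsym k) as [j Hj]. exists j. rewrite <- Hj.
  symmetry. apply Ssym_involutive, Hmod.
Qed.

Lemma curves_meet_on_sym_orbit e q gA gB nA nB yA yB p :
  valid_curve d gA -> valid_curve d gB -> inP pa pb yA -> inP pa pb yB ->
  Z.abs (jval gA nA - jval gB nB) = Z.of_nat q -> (0 < q)%nat ->
  (forall m, (m < nA)%nat -> interior_pt (Nat.iter m (T d lambda f e) (gamma lambda gA yA))) ->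
  (forall m, (m < nB)%nat -> interior_pt (Nat.iter m (T d lambda f e) (gamma lambda gB yB))) ->
  p = Nat.iter nA (T d lambda f e) (gamma lambda gA yA) ->
  p = Nat.iter nB (T d lambda f e) (gamma lambda gB yB) ->
  (forall k, (k <= q)%nat -> interior_pt (Nat.iter k (T d lambda f e) p)) ->
  (forall k, (0 < k < q)%nat -> Nat.iter k (T d lambda f e) p <> p) ->
  sym_periodic_orbit (T d lambda f e) (Ssym f e) (inP pa pb) q p.
Proof.
  intros HvA HvB PyA PyB Hj Hq HintA HintB EA EB Hint Hdist.
  apply (sym_periodic_orbit_of_reflections e p q (reflection_time gA nA) (reflection_time gB nB));
    auto.
  - pose proof (reflection_time_jval gA nA). pose proof (reflection_time_jval gB nB). lia.
  - subst p. apply curve_reflection; auto.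
  - rewrite EB. apply curve_reflection; auto.
Qed.

End Reversibility.

(** * The midpoint orbit of a periodic interval *)

Section PeriodicInterval.
Variables (d : nat) (lambda : nat -> R -> R) (pa pb : Rbar).
Hypothesis lambda_pos : forall i y, (i < d)%nat -> inP pa pb y -> 0 < lambda i y.
Hypothesis lambda_sum : forall y, inP pa pb y -> psum (fun i => lambda i y) d = 1.
Variables (y0 : R) (q : nat) (l r : R).
Hypothesis Py0 : inP pa pb y0.
Hypothesis Hper : periodic_interval d lambda y0 q l r.

Let Fy := F d lambda y0.
Let c := (l + r) / 2.

Lemma periodic_interval_translation k :
  exists s, forall x, inI l r x -> Nat.iter k Fy x = x + s.
Proof.
  destruct Hper as [[_ [_ [_ [_ HJ]]]] _].
  induction k as [|k [s Hs]].
  - exists 0. intros; simpl; ring.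
  - destruct (HJ k) as [i [Hi HJk]]. exists (s + omega_ d lambda i y0).
    intros x Hx. simpl. unfold Fy at 1.
    rewrite (F_on_J d lambda pa pb lambda_pos lambda_sum y0 i); auto.
    fold Fy. rewrite Hs; auto. ring.
Qed.

Lemma midpoint_in : inI l r c.
Proof. destruct Hper as [[Hlr _] _]. unfold inI, c; lra. Qed.

(* Each [F^k] translates [J] rigidly into one elemental subinterval, so the midpoint lands
   strictly inside it. *)
Lemma midpoint_orbit_interior k : exists i, (i < d)%nat /\
  a_ lambda i y0 < Nat.iter k Fy c < a_ lambda i y0 + lambda i y0.
Proof.
  destruct Hper as [[Hlr [_ [_ [_ HJ]]]] _].
  destruct (HJ k) as [i [Hi HJk]]. destruct (periodic_interval_translation k) as [s Hs].
  exists i; split; auto.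
  assert (Hl : inI l r l) by (unfold inI; lra).
  assert (Hm : inI l r ((c + r) / 2)) by (unfold inI, c; lra).
  pose proof (HJk l Hl) as [J1 _]. pose proof (HJk _ Hm) as [_ J2].
  rewrite Hs in J1, J2 |- * by (auto; apply midpoint_in). unfold c in *. lra.
Qed.

Lemma midpoint_orbit_range k : 0 <= Nat.iter k Fy c < 1.
Proof.
  destruct (midpoint_orbit_interior k) as [i [Hi H]].
  destruct (J_bounds d lambda pa pb lambda_pos lambda_sum y0 i Py0 Hi). lra.
Qed.

Lemma midpoint_periodic : Nat.iter q Fy c = c.
Proof.
  destruct Hper as [[Hlr [_ [Heq _]]] _].
  destruct (periodic_interval_translation q) as [s Hs].
  assert (Hl : inI l r l) by (unfold inI; lra).
  destruct (proj1 (Heq l) Hl) as [x [Hx Ex]]. rewrite Hs in Ex by auto.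
  assert (Hl' : inI l r (Nat.iter q Fy l)) by (apply (proj2 (Heq _)); exists l; split; auto).
  rewrite Hs in Hl' by auto. unfold inI in *.
  assert (s = 0) by lra. subst s. rewrite Hs by apply midpoint_in. ring.
Qed.

Lemma midpoint_minimal k : (0 < k < q)%nat -> Nat.iter k Fy c <> c.
Proof.
  intros Hk E. destruct Hper as [[_ [_ [_ [Hmin _]]]] _].
  destruct (periodic_interval_translation k) as [s Hs].
  rewrite Hs in E by apply midpoint_in. assert (s = 0) by lra. subst s.
  apply (Hmin k Hk). intros z. split.
  - intros Hz. exists z; split; auto. fold Fy. rewrite Hs; auto; ring.
  - intros [x [Hx Ex]]. fold Fy in Ex. rewrite Hs, Rplus_0_r in Ex by auto. subst; auto.
Qed.

(* Since [F^n] is injective, a point sent by [F^n] into the orbit of [c] has its whole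
   forward orbit in it: go [n q] steps around the orbit and come back [n - k]. *)
Lemma preimage_in_midpoint_orbit x n k0 k : 0 <= x < 1 ->
  Nat.iter n Fy x = Nat.iter k0 Fy c -> (k <= n)%nat ->
  exists m, Nat.iter k Fy x = Nat.iter m Fy c.
Proof.
  intros Hx E Hk. destruct Hper as [[_ [Hq _]] _].
  exists (n * q + k0 - (n - k))%nat.
  apply (F_iter_inj d lambda pa pb lambda_pos lambda_sum y0 (n - k)); auto.
  - apply F_iter_range; auto.
  - apply midpoint_orbit_range.
  - rewrite <- !Nat.iter_add. replace (n - k + k)%nat with n by lia. rewrite E.
    replace (n - k + (n * q + k0 - (n - k)))%nat with (k0 + n * q)%nat by nia.
    rewrite Nat.iter_add, iter_period_mul; auto. apply midpoint_periodic.
Qed.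

End PeriodicInterval.

(** * Continuity toolkit *)

Lemma continuous_eps_delta (h : R -> R) x : continuous h x ->
  forall eps, 0 < eps -> exists del, 0 < del /\
    forall z, Rabs (z - x) < del -> Rabs (h z - h x) < eps.
Proof.
  intros H eps Heps. apply filterlim_locally with (eps := mkposreal eps Heps) in H.
  destruct H as [del Hd]. exists del. split; [apply cond_pos|].
  intros z Hz. apply (Hd z Hz).
Qed.

Lemma eps_delta_continuous (h : R -> R) x :
  (forall eps, 0 < eps -> exists del, 0 < del /\
     forall z, Rabs (z - x) < del -> Rabs (h z - h x) < eps) -> continuous h x.
Proof.
  intros H. apply filterlim_locally. intros eps.
  destruct (H eps (cond_pos eps)) as [del [Hd H']].
  exists (mkposreal del Hd). intros z Hz. apply H', Hz.
Qed.

Definition cont2 (g : R -> R -> R) (y e : R) : Prop :=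
  continuous (fun p : R * R => g (fst p) (snd p)) (y, e).

Lemma cont2_eps_delta g y e : cont2 g y e ->
  forall eps, 0 < eps -> exists del, 0 < del /\ forall y' e',
    Rabs (y' - y) < del -> Rabs (e' - e) < del -> Rabs (g y' e' - g y e) < eps.
Proof.
  intros H eps Heps. apply filterlim_locally with (eps := mkposreal eps Heps) in H.
  destruct H as [del Hd]. exists del. split; [apply cond_pos|].
  intros y' e' Hy He. apply (Hd (y', e')). split; assumption.
Qed.

Lemma locally_box (P : R * R -> Prop) y e :
  (exists del, 0 < del /\ forall y' e', Rabs (y' - y) < del -> Rabs (e' - e) < del -> P (y', e')) ->
  locally (y, e) P.
Proof.
  intros [del [Hd H]]. exists (mkposreal del Hd). intros [y' e'] [Hy He]. apply H; assumption.
Qed.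

Lemma cont2_const c y e : cont2 (fun _ _ => c) y e.
Proof. apply continuous_const. Qed.

Lemma cont2_fst y e : cont2 (fun y _ => y) y e.
Proof. apply continuous_fst. Qed.

Lemma cont2_snd y e : cont2 (fun _ e => e) y e.
Proof. apply continuous_snd. Qed.

Lemma cont2_plus g h y e : cont2 g y e -> cont2 h y e -> cont2 (fun y e => g y e + h y e) y e.
Proof. apply (continuous_plus (V := R_NormedModule)). Qed.

Lemma cont2_minus g h y e : cont2 g y e -> cont2 h y e -> cont2 (fun y e => g y e - h y e) y e.
Proof. apply (continuous_minus (V := R_NormedModule)). Qed.

Lemma cont2_mult g h y e : cont2 g y e -> cont2 h y e -> cont2 (fun y e => g y e * h y e) y e.
Proof. apply (continuous_mult (K := R_AbsRing)). Qed.

Lemma cont2_comp (h : R -> R) g y e : continuous h (g y e) -> cont2 g y e ->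
  cont2 (fun y e => h (g y e)) y e.
Proof. intros Hh Hg. exact (continuous_comp _ h _ Hg Hh). Qed.

Lemma cont2_ext g h y e : (exists del, 0 < del /\ forall y' e',
    Rabs (y' - y) < del -> Rabs (e' - e) < del -> g y' e' = h y' e') ->
  cont2 h y e -> cont2 g y e.
Proof.
  intros Heq Hh. apply (continuous_ext_loc (fun p : R * R => g (fst p) (snd p))
    (fun p : R * R => h (fst p) (snd p))); auto.
  apply locally_box. destruct Heq as [del [Hd H]]. exists del; split; auto.
  intros. symmetry. apply H; auto.
Qed.

Lemma cont2_pos g y e : cont2 g y e -> 0 < g y e ->
  exists del, 0 < del /\ forall y' e', Rabs (y' - y) < del -> Rabs (e' - e) < del -> 0 < g y' e'.
Proof.
  intros Hg Hp. destruct (cont2_eps_delta g y e Hg (g y e) Hp) as [del [Hd H]].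
  exists del; split; auto. intros y' e' Hy He. specialize (H y' e' Hy He).
  apply Rabs_def2 in H. lra.
Qed.

Lemma continuous_comp_cont2_y (G : R -> R -> R) (u : R -> R) y e :
  cont2 G (u y) e -> continuous u y -> continuous (fun y => G (u y) e) y.
Proof.
  intros HG Hu.
  apply (continuous_comp_2 (U := R_UniformSpace) (V := R_UniformSpace) u (fun _ => e) G); auto.
  apply continuous_const.
Qed.

Lemma continuous_comp_cont2_e (G : R -> R -> R) (u : R -> R) e :
  cont2 G (u e) e -> continuous u e -> continuous (fun e => G (u e) e) e.
Proof.
  intros HG Hu.
  apply (continuous_comp_2 (U := R_UniformSpace) (V := R_UniformSpace) u (fun e => e) G); auto.
  apply continuous_id.
Qed.

Lemma cont2_slice_y g y e : cont2 g y e -> continuous (fun y => g y e) y.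
Proof. intros H. apply (continuous_comp_cont2_y g (fun y => y)); auto. apply continuous_id. Qed.

Lemma cont2_slice_e g y e : cont2 g y e -> continuous (fun e => g y e) e.
Proof. intros H. apply (continuous_comp_cont2_e g (fun _ => y)); auto.
  apply continuous_const. Qed.

Lemma cont2_of_continuous_e (h : R -> R) y e : continuous h e -> cont2 (fun _ e => h e) y e.
Proof. intros H. exact (continuous_comp snd h (y, e) (continuous_snd y e) H). Qed.

Lemma continuous_pair (p : R -> R * R) e :
  continuous (fun e => fst (p e)) e -> continuous (fun e => snd (p e)) e -> continuous p e.
Proof.
  intros H1 H2. apply (continuous_ext (fun e => (fst (p e), snd (p e)))).
  { intros; symmetry; apply surjective_pairing. }
  apply (continuous_comp_2 (U := R_UniformSpace) (V := R_UniformSpace) (W := R_UniformSpace)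
           _ _ pair); auto.
  apply (continuous_ext (fun x => x)); [intros [a b]; reflexivity|apply continuous_id].
Qed.

Lemma common_radius (Q : nat -> R -> Prop) n :
  (forall j del del', Q j del -> 0 < del' <= del -> Q j del') ->
  (forall j, (j <= n)%nat -> exists del, 0 < del /\ Q j del) ->
  exists del, 0 < del /\ forall j, (j <= n)%nat -> Q j del.
Proof.
  intros Hmono. induction n as [|n IH]; intros H.
  - destruct (H 0%nat (le_n _)) as [del [Hd Hq]]. exists del; split; auto.
    intros j Hj. replace j with 0%nat by lia. auto.
  - destruct IH as [d1 [Hd1 H1]]; [intros; apply H; lia|].
    destruct (H (S n) (le_n _)) as [d2 [Hd2 H2]].
    exists (Rmin d1 d2); split; [apply Rmin_pos; auto|].
    intros j Hj. destruct (Nat.eq_dec j (S n)) as [->|Hne].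
    + eapply Hmono; eauto. split; [apply Rmin_pos; auto|apply Rmin_r].
    + eapply Hmono; [apply H1; lia|]. split; [apply Rmin_pos; auto|apply Rmin_l].
Qed.

Lemma inP_open pa pb y : inP pa pb y ->
  exists del, 0 < del /\ forall z, Rabs (z - y) < del -> inP pa pb z.
Proof.
  intros [H1 H2].
  assert (exists d1, 0 < d1 /\ forall z, Rabs (z - y) < d1 -> Rbar_lt pa z) as [d1 [Hd1 K1]].
  { destruct pa as [a| |]; simpl in *; [|contradiction|exists 1; split; [lra|]; auto].
    exists (y - a); split; [lra|]. intros z Hz. apply Rabs_def2 in Hz. lra. }
  assert (exists d2, 0 < d2 /\ forall z, Rabs (z - y) < d2 -> Rbar_lt z pb) as [d2 [Hd2 K2]].
  { destruct pb as [b| |]; simpl in *; [|exists 1; split; [lra|]; auto|contradiction].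
    exists (b - y); split; [lra|]. intros z Hz. apply Rabs_def2 in Hz. lra. }
  exists (Rmin d1 d2); split; [apply Rmin_pos; auto|].
  intros z Hz. pose proof (Rmin_l d1 d2); pose proof (Rmin_r d1 d2).
  split; [apply K1|apply K2]; lra.
Qed.

Lemma cont2_inP_stable pa pb v y e : cont2 v y e -> inP pa pb (v y e) ->
  exists del, 0 < del /\ forall y' e',
    Rabs (y' - y) < del -> Rabs (e' - e) < del -> inP pa pb (v y' e').
Proof.
  intros Cv Pv. destruct (inP_open _ _ _ Pv) as [d0 [Hd0 H0]].
  destruct (cont2_eps_delta v y e Cv d0 Hd0) as [d1 [Hd1 H1]]. exists d1; split; auto.
Qed.

Definition C1_on (pa pb : Rbar) (g : R -> R) : Prop :=
  forall y, inP pa pb y -> ex_derive g y /\ continuous (Derive g) y.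

Section C1_on.
Variables (pa pb : Rbar).

Lemma C1_on_smooth g : smooth_on (inP pa pb) g -> C1_on pa pb g.
Proof.
  intros H y Py. split; [exact (H 1%nat y Py)|].
  apply (ex_derive_continuous (V := R_NormedModule)). exact (H 2%nat y Py).
Qed.

Lemma C1_on_const c : C1_on pa pb (fun _ => c).
Proof.
  intros y Py. split; [apply ex_derive_const|].
  apply (continuous_ext (fun _ => 0)); [intros; rewrite Derive_const; auto|].
  apply continuous_const.
Qed.

Lemma C1_on_plus g h : C1_on pa pb g -> C1_on pa pb h -> C1_on pa pb (fun x => g x + h x).
Proof.
  intros Hg Hh y Py. destruct (Hg y Py) as [G1 G2]. destruct (Hh y Py) as [H1 H2].
  split; [apply (ex_derive_plus g h); auto|].
  apply (continuous_ext_loc _ (fun x => Derive g x + Derive h x)).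
  - destruct (inP_open _ _ _ Py) as [del [Hd HP]]. exists (mkposreal del Hd).
    intros z Hz. rewrite Derive_plus; auto; [apply Hg|apply Hh]; apply HP, Hz.
  - apply (continuous_plus (V := R_NormedModule) (fun x => Derive g x) (fun x => Derive h x)); auto.
Qed.

Lemma C1_on_scal k g : C1_on pa pb g -> C1_on pa pb (fun x => k * g x).
Proof.
  intros Hg y Py. destruct (Hg y Py) as [G1 G2].
  split; [apply ex_derive_scal; auto|].
  apply (continuous_ext (fun x => k * Derive g x)); [intros; rewrite Derive_scal; auto|].
  apply (continuous_mult (K := R_AbsRing) (fun _ => k) (fun x => Derive g x)); auto.
  apply continuous_const.
Qed.

Lemma C1_on_ext g h : (forall y, g y = h y) -> C1_on pa pb h -> C1_on pa pb g.
Proof.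
  intros E H y Py. destruct (H y Py) as [H1 H2]. split.
  - apply (ex_derive_ext h); auto.
  - apply (continuous_ext (Derive h)); [intros; apply Derive_ext; auto|auto].
Qed.

Lemma C1_on_continuous g y : C1_on pa pb g -> inP pa pb y -> continuous g y.
Proof. intros H Py; apply (ex_derive_continuous (V := R_NormedModule)), H; auto. Qed.

Lemma C1_on_is_derive g y : C1_on pa pb g -> inP pa pb y -> is_derive g y (Derive g y).
Proof. intros H Py; apply Derive_correct, H; auto. Qed.

End C1_on.

Section SmoothIEM.
Variables (d : nat) (lambda : nat -> R -> R) (pa pb : Rbar).
Hypothesis lambda_smooth : forall i, (i < d)%nat -> smooth_on (inP pa pb) (lambda i).

Lemma C1_psum n : (n <= d)%nat -> C1_on pa pb (fun y => psum (fun j => lambda j y) n).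
Proof.
  induction n as [|n IH]; intros Hn; [exact (C1_on_const pa pb 0)|].
  apply (C1_on_plus _ _ (fun y => psum (fun j => lambda j y) n) (lambda n)).
  - apply IH; lia.
  - apply C1_on_smooth, lambda_smooth; lia.
Qed.

Lemma C1_a i : (i <= d)%nat -> C1_on pa pb (a_ lambda i).
Proof. apply C1_psum. Qed.

Lemma C1_omega i : (i < d)%nat -> C1_on pa pb (omega_ d lambda i).
Proof.
  intros Hi. apply (C1_on_ext _ _ _ (fun y => (psum (fun j => lambda j y) d
    + (-1) * psum (fun j => lambda j y) (S i)) + (-1) * a_ lambda i y)).
  { intros; unfold omega_; ring. }
  apply (C1_on_plus _ _ (fun y => psum (fun j => lambda j y) d
    + (-1) * psum (fun j => lambda j y) (S i)) (fun y => (-1) * a_ lambda i y)).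
  - apply (C1_on_plus _ _ (fun y => psum (fun j => lambda j y) d)
      (fun y => (-1) * psum (fun j => lambda j y) (S i))).
    + apply C1_psum; lia.
    + apply C1_on_scal, C1_psum; lia.
  - apply C1_on_scal, C1_a; lia.
Qed.

Lemma C1_m i : (i < d)%nat -> C1_on pa pb (m_ lambda i).
Proof.
  intros Hi. apply (C1_on_ext _ _ _ (fun y => a_ lambda i y + (/2) * lambda i y)).
  { intros; unfold m_; field. }
  apply (C1_on_plus _ _ (a_ lambda i) (fun y => (/2) * lambda i y)).
  - apply C1_a; lia.
  - apply C1_on_scal, C1_on_smooth, lambda_smooth; auto.
Qed.

End SmoothIEM.

(** * Transversal intersection of two families of curves *)

Definition increasing_with_slope (g : R -> R) (c s m : R) :=
  forall z w, c - s <= z -> z < w -> w <= c + s -> m * (w - z) <= g w - g z.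

Lemma increasing_root_exists g c s m : 0 < s -> 0 < m -> increasing_with_slope g c s m ->
  (forall z, c - s <= z <= c + s -> continuous g z) -> Rabs (g c) < m * s ->
  exists z, Rabs (z - c) < s /\ g z = 0.
Proof.
  intros Hs Hm Hi Hc Hg.
  assert (H1 : m * (c - (c - s)) <= g c - g (c - s)) by (apply Hi; lra).
  assert (H2 : m * (c + s - c) <= g (c + s) - g c) by (apply Hi; lra).
  apply Rabs_def2 in Hg.
  destruct (Ranalysis5.IVT_interv g (c - s) (c + s)) as [z [Hz1 Hz2]]; try nra.
  - intros a Ha. apply continuity_pt_filterlim, Hc; auto.
  - exists z; split; auto. apply Rabs_def1.
    + destruct (Req_dec z (c + s)); [subst; nra|lra].
    + destruct (Req_dec z (c - s)); [subst; nra|lra].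
Qed.

Lemma increasing_root_unique g c s m z z' : 0 < m -> increasing_with_slope g c s m ->
  c - s <= z <= c + s -> c - s <= z' <= c + s -> g z = 0 -> g z' = 0 -> z = z'.
Proof.
  intros Hm Hi Hz Hz' E E'.
  destruct (Rtotal_order z z') as [Hl|[He|Hl]]; auto.
  - specialize (Hi z z' ltac:(lra) Hl ltac:(lra)). nra.
  - specialize (Hi z' z ltac:(lra) Hl ltac:(lra)). nra.
Qed.

(* The root [rt t] of the uniformly increasing [g t] moves continuously with [t]: near the
   root at [t0] the values [g t0 (rt t0 +- e')] have opposite signs, which persist. *)
Lemma increasing_root_continuous (g : R -> R -> R) (rt : R -> R) t0 c s m del0 :
  0 < m -> 0 < del0 ->
  (forall t, Rabs (t - t0) < del0 ->
     increasing_with_slope (g t) c s m /\ Rabs (rt t - c) < s /\ g t (rt t) = 0) ->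
  (forall z, c - s <= z <= c + s -> continuous (fun t => g t z) t0) -> continuous rt t0.
Proof.
  intros Hm Hd0 H Hc. apply eps_delta_continuous. intros eps Heps.
  destruct (H t0) as [Hi0 [Hr0 Hg0]]; [rewrite Rminus_eq_0, Rabs_R0; auto|].
  apply Rabs_def2 in Hr0.
  set (e' := Rmin (eps/2) (Rmin ((c + s - rt t0)/2) ((rt t0 - (c - s))/2))).
  assert (He'1 : 0 < e') by (unfold e'; repeat apply Rmin_pos; lra).
  assert (He'2 : e' <= eps/2) by apply Rmin_l.
  assert (He'3 : e' <= (c + s - rt t0)/2) by (eapply Rle_trans; [apply Rmin_r|apply Rmin_l]).
  assert (He'4 : e' <= (rt t0 - (c - s))/2) by (eapply Rle_trans; [apply Rmin_r|apply Rmin_r]).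
  assert (Gp : m * e' <= g t0 (rt t0 + e')).
  { specialize (Hi0 (rt t0) (rt t0 + e') ltac:(lra) ltac:(lra) ltac:(lra)). lra. }
  assert (Gn : g t0 (rt t0 - e') <= - (m * e')).
  { specialize (Hi0 (rt t0 - e') (rt t0) ltac:(lra) ltac:(lra) ltac:(lra)).
    replace (rt t0 - (rt t0 - e')) with e' in Hi0 by ring. lra. }
  assert (Hme : 0 < m * e') by nra.
  destruct (continuous_eps_delta _ _ (Hc (rt t0 + e') ltac:(lra)) (m * e') Hme) as [d1 [Hd1 K1]].
  destruct (continuous_eps_delta _ _ (Hc (rt t0 - e') ltac:(lra)) (m * e') Hme) as [d2 [Hd2 K2]].
  exists (Rmin del0 (Rmin d1 d2)). split; [repeat apply Rmin_pos; auto|].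
  intros t Ht. pose proof (Rmin_l del0 (Rmin d1 d2)). pose proof (Rmin_r del0 (Rmin d1 d2)).
  pose proof (Rmin_l d1 d2). pose proof (Rmin_r d1 d2).
  specialize (K1 t ltac:(lra)). specialize (K2 t ltac:(lra)).
  apply Rabs_def2 in K1. apply Rabs_def2 in K2.
  destruct (H t ltac:(lra)) as [Hi [Hr Hg]]. apply Rabs_def2 in Hr.
  apply Rabs_def1.
  - destruct (Rlt_dec (rt t) (rt t0 + e')) as [Hl|Hl]; [lra|].
    exfalso. destruct (Req_dec (rt t) (rt t0 + e')) as [Ee|Ne]; [rewrite Ee in Hg; lra|].
    specialize (Hi (rt t0 + e') (rt t) ltac:(lra) ltac:(lra) ltac:(lra)). nra.
  - destruct (Rlt_dec (rt t0 - e') (rt t)) as [Hl|Hl]; [lra|].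
    exfalso. destruct (Req_dec (rt t) (rt t0 - e')) as [Ee|Ne]; [rewrite Ee in Hg; lra|].
    specialize (Hi (rt t) (rt t0 - e') ltac:(lra) ltac:(lra) ltac:(lra)). nra.
Qed.

Lemma MVT_in_ball (g dg : R -> R) c rad u v :
  (forall z, Rabs (z - c) < rad -> is_derive g z (dg z)) ->
  Rabs (u - c) < rad -> Rabs (v - c) < rad ->
  exists xi, Rabs (xi - c) < rad /\ g v - g u = dg xi * (v - u).
Proof.
  intros H Hu Hv. apply Rabs_def2 in Hu. apply Rabs_def2 in Hv.
  assert (Hin : forall z, Rmin u v <= z <= Rmax u v -> Rabs (z - c) < rad).
  { intros z Hz. unfold Rmin, Rmax in Hz. apply Rabs_def1; destruct (Rle_dec u v); lra. }
  destruct (MVT_gen g u v dg) as [xi [H1 H2]].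
  - intros z Hz. apply H, Hin. lra.
  - intros z Hz. apply continuity_pt_filterlim, (ex_derive_continuous (V := R_NormedModule)).
    exists (dg z); apply H, Hin; auto.
  - exists xi; auto.
Qed.

(* If the four derivatives are [eta]-close to [uA], [1], [uB], [1] and [H] is the increment
   along curve B matching an increment [D] along curve A in the second coordinate, then the
   first coordinates separate at rate at least [|uA - uB| / 2]. *)
Lemma transversal_separation uA uB eta A1 A2 B1 B2 D H :
  0 < eta -> eta <= 1/2 -> eta * (8 * (1 + Rabs uB)) <= Rabs (uA - uB) ->
  Rabs (A1 - uA) < eta -> Rabs (A2 - 1) < eta -> Rabs (B1 - uB) < eta -> Rabs (B2 - 1) < eta ->
  B2 * H = A2 * D -> 0 < D ->
  Rabs (uA - uB) / 2 * D <= (if Rlt_dec uB uA then 1 else -1) * (A1 * D - B1 * H).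
Proof.
  intros He1 He2 He3 HA1 HA2 HB1 HB2 EH HD.
  apply Rabs_def2 in HA1; apply Rabs_def2 in HA2; apply Rabs_def2 in HB1; apply Rabs_def2 in HB2.
  assert (EH' : H = A2 * D / B2) by (field_simplify; [|lra]; rewrite <- EH; field; lra).
  set (X := A1 - B1 * A2 / B2).
  assert (EX : A1 * D - B1 * H = X * D) by (unfold X; rewrite EH'; field; lra).
  rewrite EX.
  assert (Hnum : Rabs (B1 * A2 - uB * B2) <= eta * (3/2) + Rabs uB * (2 * eta)).
  { replace (B1 * A2 - uB * B2) with ((B1 - uB) * A2 + uB * (A2 - B2)) by ring.
    eapply Rle_trans; [apply Rabs_triang|]. rewrite !Rabs_mult.
    apply Rplus_le_compat.
    - apply Rmult_le_compat; try apply Rabs_pos.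
      + apply Rlt_le, Rabs_def1; lra.
      + apply Rabs_le; lra.
    - apply Rmult_le_compat_l; [apply Rabs_pos|]. apply Rabs_le; lra. }
  assert (Hq : Rabs (B1 * A2 / B2 - uB) <= 2 * (eta * (3/2) + Rabs uB * (2 * eta))).
  { replace (B1 * A2 / B2 - uB) with ((B1 * A2 - uB * B2) / B2) by (field; lra).
    unfold Rdiv. rewrite Rabs_mult, Rabs_inv, (Rabs_right B2) by lra.
    apply Rle_trans with (Rabs (B1 * A2 - uB * B2) * 2); [|lra].
    apply Rmult_le_compat_l; [apply Rabs_pos|].
    apply Rle_trans with (/ (1/2)); [apply Rinv_le_contravar|]; lra. }
  assert (HX : Rabs (X - (uA - uB)) <= Rabs (uA - uB) / 2).
  { unfold X.
    replace (A1 - B1 * A2 / B2 - (uA - uB)) with ((A1 - uA) - (B1 * A2 / B2 - uB)) by ring.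
    eapply Rle_trans; [apply Rabs_triang|]. rewrite Rabs_Ropp.
    assert (Rabs (A1 - uA) <= eta) by (apply Rabs_le; lra).
    pose proof (Rabs_pos uB). nra. }
  pose proof (Rle_abs (X - (uA - uB))). pose proof (Rle_abs (- (X - (uA - uB)))).
  rewrite Rabs_Ropp in *.
  destruct (Rlt_dec uB uA).
  - rewrite (Rabs_right (uA - uB)) in HX |- * by lra. nra.
  - rewrite (Rabs_left1 (uA - uB)) in HX |- * by lra. nra.
Qed.

Section Transversal.
Variables (a1 a2 b1 b2 da1 da2 db1 db2 : R -> R -> R) (yA yB uA uB eta r1 : R).
Hypothesis r1_pos : 0 < r1.
Hypothesis a1_deriv : forall y e, Rabs (y - yA) < r1 -> Rabs e < r1 ->
  is_derive (fun z => a1 z e) y (da1 y e).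
Hypothesis a2_deriv : forall y e, Rabs (y - yA) < r1 -> Rabs e < r1 ->
  is_derive (fun z => a2 z e) y (da2 y e).
Hypothesis b1_deriv : forall y e, Rabs (y - yB) < r1 -> Rabs e < r1 ->
  is_derive (fun z => b1 z e) y (db1 y e).
Hypothesis b2_deriv : forall y e, Rabs (y - yB) < r1 -> Rabs e < r1 ->
  is_derive (fun z => b2 z e) y (db2 y e).
Hypothesis a1_cont : forall y e, Rabs (y - yA) < r1 -> Rabs e < r1 -> cont2 a1 y e.
Hypothesis a2_cont : forall y e, Rabs (y - yA) < r1 -> Rabs e < r1 -> cont2 a2 y e.
Hypothesis b1_cont : forall y e, Rabs (y - yB) < r1 -> Rabs e < r1 -> cont2 b1 y e.
Hypothesis b2_cont : forall y e, Rabs (y - yB) < r1 -> Rabs e < r1 -> cont2 b2 y e.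
Hypothesis da1_near : forall y e, Rabs (y - yA) < r1 -> Rabs e < r1 -> Rabs (da1 y e - uA) < eta.
Hypothesis da2_near : forall y e, Rabs (y - yA) < r1 -> Rabs e < r1 -> Rabs (da2 y e - 1) < eta.
Hypothesis db1_near : forall y e, Rabs (y - yB) < r1 -> Rabs e < r1 -> Rabs (db1 y e - uB) < eta.
Hypothesis db2_near : forall y e, Rabs (y - yB) < r1 -> Rabs e < r1 -> Rabs (db2 y e - 1) < eta.
Hypothesis eta_small : 0 < eta /\ eta <= 1/2 /\ eta * (8 * (1 + Rabs uB)) <= Rabs (uA - uB).
Hypothesis base1 : a1 yA 0 = b1 yB 0.
Hypothesis base2 : a2 yA 0 = b2 yB 0.

Let s := r1 / 2.

Lemma b2_increasing y e : Rabs e < r1 ->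
  increasing_with_slope (fun z => b2 z e - a2 y e) yB s (1/2).
Proof.
  intros He z w Hz Hzw Hw.
  destruct (MVT_in_ball (fun z => b2 z e) (fun z => db2 z e) yB r1 z w) as [xi [Hxi E]].
  - intros x Hx. apply b2_deriv; auto.
  - apply Rabs_def1; unfold s in *; lra.
  - apply Rabs_def1; unfold s in *; lra.
  - pose proof (db2_near xi e Hxi He) as K. apply Rabs_def2 in K.
    destruct eta_small as [? [? ?]]. simpl. nra.
Qed.

Lemma partner_radius : exists t, 0 < t /\ t <= s /\ forall y e,
  Rabs (y - yA) < t -> Rabs e < t -> Rabs (b2 yB e - a2 y e) < (1/2) * s.
Proof.
  assert (Hs : 0 < s) by (unfold s; lra).
  assert (H0 : Rabs 0 < r1) by (rewrite Rabs_R0; lra).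
  assert (HyA : Rabs (yA - yA) < r1) by (rewrite Rminus_eq_0, Rabs_R0; lra).
  assert (HyB : Rabs (yB - yB) < r1) by (rewrite Rminus_eq_0, Rabs_R0; lra).
  destruct (cont2_eps_delta _ _ _ (b2_cont yB 0 HyB H0) (s/4)) as [d1 [Hd1 K1]]; [lra|].
  destruct (cont2_eps_delta _ _ _ (a2_cont yA 0 HyA H0) (s/4)) as [d2 [Hd2 K2]]; [lra|].
  exists (Rmin s (Rmin d1 d2)). split; [repeat apply Rmin_pos; auto|]. split; [apply Rmin_l|].
  intros y e Hy He. pose proof (Rmin_l s (Rmin d1 d2)). pose proof (Rmin_r s (Rmin d1 d2)).
  pose proof (Rmin_l d1 d2). pose proof (Rmin_r d1 d2).
  specialize (K1 yB e ltac:(rewrite Rminus_eq_0, Rabs_R0; lra) ltac:(rewrite Rminus_0_r; lra)).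
  specialize (K2 y e ltac:(lra) ltac:(rewrite Rminus_0_r; lra)).
  rewrite base2 in K2.
  replace (b2 yB e - a2 y e) with ((b2 yB e - b2 yB 0) - (a2 y e - b2 yB 0)) by ring.
  eapply Rle_lt_trans; [apply Rabs_triang|]. rewrite Rabs_Ropp. lra.
Qed.

Section Partner.
Variable t : R.
Hypothesis t_radius : 0 < t /\ t <= s /\ forall y e, Rabs (y - yA) < t -> Rabs e < t ->
  Rabs (b2 yB e - a2 y e) < (1/2) * s.

Lemma partner_exists y e : exists z,
  Rabs (y - yA) < t -> Rabs e < t -> Rabs (z - yB) < s /\ b2 z e = a2 y e.
Proof.
  destruct (Rlt_dec (Rabs (y - yA)) t) as [Hy|Hy]; [|exists 0; intros; contradiction].
  destruct (Rlt_dec (Rabs e) t) as [He|He]; [|exists 0; intros; contradiction].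
  destruct t_radius as [Ht [Hts Hclose]]. assert (Hs : 0 < s) by lra.
  destruct (increasing_root_exists (fun z => b2 z e - a2 y e) yB s (1/2)) as [z [Hz1 Hz2]];
    try lra.
  - apply b2_increasing; unfold s in *; lra.
  - intros z Hz. apply (continuous_minus (V := R_NormedModule)); [|apply continuous_const].
    apply cont2_slice_y, b2_cont; [apply Rabs_def1|]; unfold s in *; lra.
  - apply Hclose; auto.
  - exists z. intros; split; auto; lra.
Qed.

(** [partner y e] is the parameter on curve B whose second coordinate matches that of
    curve A at [y] (an arbitrary value outside the radius [t]). *)
Definition partner y e := proj1_sig (constructive_indefinite_description _ (partner_exists y e)).

Lemma partner_spec y e : Rabs (y - yA) < t -> Rabs e < t ->
  Rabs (partner y e - yB) < s /\ b2 (partner y e) e = a2 y e.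
Proof. unfold partner. destruct (constructive_indefinite_description _ _) as [z Hz]; auto. Qed.

Lemma partner_unique y e z : Rabs (y - yA) < t -> Rabs e < t ->
  Rabs (z - yB) <= s -> b2 z e = a2 y e -> z = partner y e.
Proof.
  intros Hy He Hz E. destruct (partner_spec y e Hy He) as [H1 H2].
  apply Rabs_le_between' in Hz. apply Rabs_def2 in H1.
  apply (increasing_root_unique (fun z => b2 z e - a2 y e) yB s (1/2)); try lra.
  apply b2_increasing. unfold s in *; lra.
Qed.

Lemma partner_mvt e y y' : Rabs (y - yA) < t -> Rabs (y' - yA) < t -> Rabs e < t ->
  exists xi zeta, Rabs (xi - yA) < r1 /\ Rabs (zeta - yB) < r1 /\
    da2 xi e * (y' - y) = db2 zeta e * (partner y' e - partner y e).
Proof.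
  intros Hy Hy' He. assert (Htr : t < r1) by (unfold s in *; lra).
  destruct (partner_spec y e Hy He) as [K1 K2]. destruct (partner_spec y' e Hy' He) as [K3 K4].
  destruct (MVT_in_ball (fun z => a2 z e) (fun z => da2 z e) yA r1 y y') as [xi [Hxi E1]];
    try (intros; apply a2_deriv); try lra.
  destruct (MVT_in_ball (fun z => b2 z e) (fun z => db2 z e) yB r1 (partner y e) (partner y' e))
    as [zeta [Hz E2]]; try (intros; apply b2_deriv); try (unfold s in *; lra).
  exists xi, zeta. split; auto. split; auto. rewrite <- E1, <- E2, K2, K4. ring.
Qed.

Lemma partner_lipschitz e y y' : Rabs (y - yA) < t -> Rabs (y' - yA) < t -> Rabs e < t ->
  Rabs (partner y' e - partner y e) <= 3 * Rabs (y' - y).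
Proof.
  intros Hy Hy' He. assert (Htr : t < r1) by (unfold s in *; lra).
  destruct (partner_mvt e y y' Hy Hy' He) as [xi [zeta [Hxi [Hz E]]]].
  pose proof (da2_near xi e Hxi ltac:(lra)) as Ka. pose proof (db2_near zeta e Hz ltac:(lra)) as Kb.
  apply Rabs_def2 in Ka. apply Rabs_def2 in Kb. destruct eta_small as [? [? ?]].
  assert (E' : Rabs (da2 xi e) * Rabs (y' - y)
              = Rabs (db2 zeta e) * Rabs (partner y' e - partner y e))
    by (rewrite <- !Rabs_mult, E; auto).
  rewrite (Rabs_right (da2 xi e)), (Rabs_right (db2 zeta e)) in E' by lra.
  pose proof (Rabs_pos (y' - y)). pose proof (Rabs_pos (partner y' e - partner y e)). nra.
Qed.

Lemma partner_continuous_y e y : Rabs (y - yA) < t -> Rabs e < t ->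
  continuous (fun y => partner y e) y.
Proof.
  intros Hy He. apply eps_delta_continuous. intros eps Heps.
  exists (Rmin (eps/3) (t - Rabs (y - yA))). split; [apply Rmin_pos; lra|].
  intros z Hz. pose proof (Rmin_l (eps/3) (t - Rabs (y - yA))).
  pose proof (Rmin_r (eps/3) (t - Rabs (y - yA))).
  assert (Rabs (z - yA) < t).
  { replace (z - yA) with ((z - y) + (y - yA)) by ring.
    eapply Rle_lt_trans; [apply Rabs_triang|]. lra. }
  pose proof (partner_lipschitz e y z Hy H1 He). lra.
Qed.

Lemma partner_continuous_e e y : Rabs (y - yA) < t -> Rabs e < t ->
  continuous (fun e => partner y e) e.
Proof.
  intros Hy He. assert (Htr : t < r1) by (unfold s in *; lra).
  assert (Hs : 0 < s) by lra.
  apply (increasing_root_continuous (fun e' z => b2 z e' - a2 y e') (fun e' => partner y e')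
           e yB s (1/2) (t - Rabs e)); try lra.
  - intros e' He'. assert (Rabs e' < t).
    { replace e' with ((e' - e) + e) by ring. eapply Rle_lt_trans; [apply Rabs_triang|]. lra. }
    destruct (partner_spec y e' Hy H) as [K1 K2].
    split; [apply b2_increasing; lra|]. split; auto. lra.
  - intros z Hz. apply (continuous_minus (V := R_NormedModule)).
    + apply cont2_slice_e, b2_cont; [apply Rabs_def1|]; unfold s in *; lra.
    + apply cont2_slice_e, a2_cont; lra.
Qed.

Lemma partner_base : partner yA 0 = yB.
Proof.
  symmetry. apply partner_unique; try (rewrite ?Rminus_eq_0, ?Rabs_R0; unfold s in *; lra); auto.
Qed.

Let sg := if Rlt_dec uB uA then 1 else -1.
Let K := Rabs (uA - uB).
Let s' := t / 2.

(** The horizontal gap between the two curves at matching heights, signed so that it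
    increases with [y]; its zero is the intersection point. *)
Definition gap y e := sg * (a1 y e - b1 (partner y e) e).

Lemma sg_neq0 : sg <> 0.
Proof. unfold sg; destruct (Rlt_dec uB uA); lra. Qed.

Lemma slope_difference_pos : 0 < K.
Proof. unfold K. destruct eta_small as [? [? ?]]. pose proof (Rabs_pos uB). nra. Qed.

Lemma gap_increasing e : Rabs e < t -> increasing_with_slope (fun y => gap y e) yA s' (K / 2).
Proof.
  intros He z w Hz Hzw Hw. assert (Htr : t < r1) by (unfold s in *; lra). unfold s' in *.
  assert (Hz' : Rabs (z - yA) < t) by (apply Rabs_def1; lra).
  assert (Hw' : Rabs (w - yA) < t) by (apply Rabs_def1; lra).
  destruct (MVT_in_ball (fun z => a1 z e) (fun z => da1 z e) yA r1 z w) as [x1 [Hx1 E1]];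
    try (intros; apply a1_deriv); try lra.
  destruct (partner_mvt e z w Hz' Hw' He) as [x2 [zeta [Hx2 [Hzeta E2]]]].
  destruct (partner_spec z e Hz' He) as [K1 _]. destruct (partner_spec w e Hw' He) as [K3 _].
  destruct (MVT_in_ball (fun z => b1 z e) (fun z => db1 z e) yB r1 (partner z e) (partner w e))
    as [zeta' [Hzeta' E3]]; try (intros; apply b1_deriv); try (unfold s in *; lra).
  destruct eta_small as [Ha [Hb Hc]].
  pose proof (transversal_separation uA uB eta (da1 x1 e) (da2 x2 e) (db1 zeta' e) (db2 zeta e)
     (w - z) (partner w e - partner z e) Ha Hb Hc
     (da1_near x1 e Hx1 ltac:(lra)) (da2_near x2 e Hx2 ltac:(lra))
     (db1_near zeta' e Hzeta' ltac:(lra)) (db2_near zeta e Hzeta ltac:(lra))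
     ltac:(rewrite <- E2; ring) ltac:(lra)) as I.
  unfold gap. fold sg in I. fold K in I.
  replace (sg * (a1 w e - b1 (partner w e) e) - sg * (a1 z e - b1 (partner z e) e))
    with (sg * ((a1 w e - a1 z e) - (b1 (partner w e) e - b1 (partner z e) e))) by ring.
  rewrite E1, E3. lra.
Qed.

Lemma gap_continuous_y e y : Rabs e < t -> Rabs (y - yA) < t -> continuous (fun y => gap y e) y.
Proof.
  intros He Hy. assert (Htr : t < r1) by (unfold s in *; lra). unfold gap.
  apply (continuous_mult (K := R_AbsRing) (fun _ => sg)); [apply continuous_const|].
  apply (continuous_minus (V := R_NormedModule) (fun y => a1 y e) (fun y => b1 (partner y e) e)).
  - apply cont2_slice_y, a1_cont; lra.
  - apply (continuous_comp_cont2_y b1 (fun y => partner y e)).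
    + destruct (partner_spec y e Hy He) as [K1 _]. apply b1_cont; unfold s in *; lra.
    + apply partner_continuous_y; auto.
Qed.

Lemma gap_continuous_e e y : Rabs e < t -> Rabs (y - yA) < t -> continuous (fun e => gap y e) e.
Proof.
  intros He Hy. assert (Htr : t < r1) by (unfold s in *; lra). unfold gap.
  apply (continuous_mult (K := R_AbsRing) (fun _ => sg)); [apply continuous_const|].
  apply (continuous_minus (V := R_NormedModule) (fun e => a1 y e) (fun e => b1 (partner y e) e)).
  - apply cont2_slice_e, a1_cont; lra.
  - apply (continuous_comp_cont2_e b1 (fun e => partner y e)).
    + destruct (partner_spec y e Hy He) as [K1 _]. apply b1_cont; unfold s in *; lra.
    + apply partner_continuous_e; auto.
Qed.

Lemma gap_base : gap yA 0 = 0.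
Proof. unfold gap. rewrite partner_base, base1. ring. Qed.

Lemma gap_radius : exists eps0, 0 < eps0 /\ eps0 <= t /\
  forall e, Rabs e < eps0 -> Rabs (gap yA e) < K / 2 * s'.
Proof.
  pose proof slope_difference_pos. destruct t_radius as [Ht _].
  assert (HKs : 0 < K / 2 * s') by (unfold s'; apply Rmult_lt_0_compat; lra).
  destruct (continuous_eps_delta _ _ (gap_continuous_e 0 yA ltac:(rewrite Rabs_R0; lra)
    ltac:(rewrite Rminus_eq_0, Rabs_R0; lra)) _ HKs) as [del [Hd Hdel]].
  exists (Rmin del t). split; [apply Rmin_pos; lra|]. split; [apply Rmin_r|].
  intros e He. pose proof (Rmin_l del t). specialize (Hdel e ltac:(rewrite Rminus_0_r; lra)).
  rewrite gap_base, Rminus_0_r in Hdel. auto.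
Qed.

Section Intersection.
Variable eps0 : R.
Hypothesis eps0_radius : 0 < eps0 /\ eps0 <= t /\
  forall e, Rabs e < eps0 -> Rabs (gap yA e) < K / 2 * s'.

Lemma gap_root_exists e : exists z, Rabs e < eps0 -> Rabs (z - yA) < s' /\ gap z e = 0.
Proof.
  destruct (Rlt_dec (Rabs e) eps0) as [He|He]; [|exists 0; intros; contradiction].
  pose proof slope_difference_pos. destruct t_radius as [Ht _]. assert (0 < s') by (unfold s'; lra).
  destruct eps0_radius as [_ [He0 Hg]].
  destruct (increasing_root_exists (fun y => gap y e) yA s' (K/2)) as [z [Hz1 Hz2]]; try lra.
  - apply gap_increasing; lra.
  - intros z Hz. apply gap_continuous_y; [lra|]. apply Rabs_def1; unfold s' in *; lra.
  - apply Hg; auto.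
  - exists z; auto.
Qed.

Definition yA_of e := proj1_sig (constructive_indefinite_description _ (gap_root_exists e)).
Definition yB_of e := partner (yA_of e) e.

Lemma yA_of_spec e : Rabs e < eps0 -> Rabs (yA_of e - yA) < s' /\ gap (yA_of e) e = 0.
Proof. unfold yA_of. destruct (constructive_indefinite_description _ _) as [z Hz]; auto. Qed.

Lemma yA_of_base : yA_of 0 = yA.
Proof.
  pose proof slope_difference_pos. destruct t_radius as [Ht _]. destruct eps0_radius as [He0 _].
  destruct (yA_of_spec 0) as [K1 K2]; [rewrite Rabs_R0; lra|].
  apply Rabs_def2 in K1.
  apply (increasing_root_unique (fun y => gap y 0) yA s' (K/2)); unfold s' in *; try lra.
  - apply gap_increasing; rewrite Rabs_R0; lra.
  - apply gap_base.
Qed.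

Lemma intersection_params e : Rabs e < eps0 ->
  Rabs (yA_of e - yA) < s' /\ Rabs (yB_of e - yB) < s /\
  a1 (yA_of e) e = b1 (yB_of e) e /\ a2 (yA_of e) e = b2 (yB_of e) e.
Proof.
  intros He. destruct t_radius as [Ht _]. destruct eps0_radius as [_ [He0 _]].
  destruct (yA_of_spec e He) as [K1 K2].
  destruct (partner_spec (yA_of e) e ltac:(unfold s' in *; lra) ltac:(lra)) as [K3 K4].
  repeat split; auto.
  unfold gap in K2. apply Rmult_integral in K2. destruct K2 as [E|E].
  - exfalso. exact (sg_neq0 E).
  - unfold yB_of. lra.
Qed.

Lemma intersection_unique e z z' : Rabs e < eps0 ->
  Rabs (z - yA) < s' -> Rabs (z' - yB) < s -> a1 z e = b1 z' e -> a2 z e = b2 z' e ->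
  z = yA_of e /\ z' = yB_of e.
Proof.
  intros He Hz Hz' Ez Ez'. pose proof slope_difference_pos. destruct t_radius as [Ht _].
  destruct eps0_radius as [_ [He0 _]]. destruct (yA_of_spec e He) as [K1 K2].
  assert (Ez'p : z' = partner z e) by (apply partner_unique; unfold s' in *; auto; lra).
  assert (z = yA_of e).
  { apply Rabs_def2 in Hz. apply Rabs_def2 in K1.
    apply (increasing_root_unique (fun y => gap y e) yA s' (K/2)); unfold s' in *; try lra.
    - apply gap_increasing; lra.
    - unfold gap. rewrite <- Ez'p, Ez. ring. }
  subst z. split; auto.
Qed.

Lemma yA_of_continuous e : Rabs e < eps0 -> continuous yA_of e.
Proof.
  intros He. pose proof slope_difference_pos.
  destruct t_radius as [Ht _]. destruct eps0_radius as [_ [He0 _]].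
  apply (increasing_root_continuous (fun e' z => gap z e') yA_of e yA s' (K/2) (eps0 - Rabs e));
    unfold s' in *; try lra.
  - intros e' He'. assert (He'0 : Rabs e' < eps0).
    { replace e' with ((e' - e) + e) by ring. eapply Rle_lt_trans; [apply Rabs_triang|]. lra. }
    destruct (yA_of_spec e' He'0) as [L1 L2]. split; [apply gap_increasing; lra|]. split; auto.
  - intros z Hz. apply gap_continuous_e; [lra|]. apply Rabs_def1; lra.
Qed.

End Intersection.
End Partner.

Lemma transversal_local : exists eps0 dA dB (y1 y2 : R -> R),
  0 < eps0 <= r1 /\ 0 < dA <= r1 /\ 0 < dB <= r1 /\ y1 0 = yA /\
  forall e, Rabs e < eps0 ->
    Rabs (y1 e - yA) < dA /\ Rabs (y2 e - yB) < dB /\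
    a1 (y1 e) e = b1 (y2 e) e /\ a2 (y1 e) e = b2 (y2 e) e /\
    (forall z z', Rabs (z - yA) < dA -> Rabs (z' - yB) < dB ->
       a1 z e = b1 z' e -> a2 z e = b2 z' e -> z = y1 e /\ z' = y2 e) /\
    continuous y1 e.
Proof.
  destruct partner_radius as [t Ht]. destruct (gap_radius t Ht) as [eps0 He0].
  pose proof Ht as [Ht0 [Hts _]]. pose proof He0 as [He00 [He0t _]].
  exists eps0, (t / 2), s, (yA_of t Ht eps0 He0), (yB_of t Ht eps0 He0).
  split; [unfold s in *; lra|]. split; [unfold s in *; lra|]. split; [unfold s in *; lra|].
  split; [apply yA_of_base; auto|].
  intros e He. destruct (intersection_params t Ht eps0 He0 e He) as [I1 [I2 [I3 I4]]].
  split; [auto|]. split; [auto|]. split; [auto|]. split; [auto|]. split.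
  - intros z z' Hz Hz'. apply intersection_unique; auto.
  - apply yA_of_continuous; auto.
Qed.

End Transversal.

Definition C1_family (a1 a2 da1 da2 : R -> R -> R) (yc r0 : R) : Prop :=
  forall y e, Rabs (y - yc) < r0 -> Rabs e < r0 ->
    is_derive (fun z => a1 z e) y (da1 y e) /\ is_derive (fun z => a2 z e) y (da2 y e) /\
    cont2 a1 y e /\ cont2 a2 y e.

Lemma separation_tolerance uA uB : uA <> uB ->
  exists eta, 0 < eta /\ eta <= 1/2 /\ eta * (8 * (1 + Rabs uB)) <= Rabs (uA - uB).
Proof.
  intros Hne. assert (HK : 0 < Rabs (uA - uB)) by (apply Rabs_pos_lt; lra).
  pose proof (Rabs_pos uB).
  exists (Rmin (1/2) (Rabs (uA - uB) / (8 * (1 + Rabs uB)))).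
  split; [apply Rmin_pos; [lra|apply Rdiv_lt_0_compat; lra]|]. split; [apply Rmin_l|].
  apply Rle_trans with (Rabs (uA - uB) / (8 * (1 + Rabs uB)) * (8 * (1 + Rabs uB))).
  - apply Rmult_le_compat_r; [lra|apply Rmin_r].
  - right. field. lra.
Qed.

(* Near the base point the curves have second-coordinate slope close to 1 and distinct
   first-coordinate slopes; shrinking to a radius where all four derivatives are
   [eta]-close to their base values puts us in the setting of [Transversal]. *)
Lemma transversal_intersection (a1 a2 b1 b2 da1 da2 db1 db2 : R -> R -> R) (yA yB r : R) :
  0 < r ->
  C1_family a1 a2 da1 da2 yA r -> C1_family b1 b2 db1 db2 yB r ->
  cont2 da1 yA 0 -> cont2 da2 yA 0 -> da2 yA 0 = 1 ->
  cont2 db1 yB 0 -> cont2 db2 yB 0 -> db2 yB 0 = 1 ->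
  da1 yA 0 <> db1 yB 0 ->
  a1 yA 0 = b1 yB 0 -> a2 yA 0 = b2 yB 0 ->
  exists eps0 dA dB (y1 y2 : R -> R),
    0 < eps0 <= r /\ 0 < dA <= r /\ 0 < dB <= r /\ y1 0 = yA /\
    forall e, Rabs e < eps0 ->
      Rabs (y1 e - yA) < dA /\ Rabs (y2 e - yB) < dB /\
      a1 (y1 e) e = b1 (y2 e) e /\ a2 (y1 e) e = b2 (y2 e) e /\
      (forall z z', Rabs (z - yA) < dA -> Rabs (z' - yB) < dB ->
         a1 z e = b1 z' e -> a2 z e = b2 z' e -> z = y1 e /\ z' = y2 e) /\
      continuous y1 e.
Proof.
  intros Hr HA HB C1 C2 E2 D1 D2 F2 Hne H01 H02.
  destruct (separation_tolerance _ _ Hne) as [eta Heta].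
  destruct (cont2_eps_delta _ _ _ C1 eta (proj1 Heta)) as [d1 [Hd1 K1]].
  destruct (cont2_eps_delta _ _ _ C2 eta (proj1 Heta)) as [d2 [Hd2 K2]].
  destruct (cont2_eps_delta _ _ _ D1 eta (proj1 Heta)) as [d3 [Hd3 K3]].
  destruct (cont2_eps_delta _ _ _ D2 eta (proj1 Heta)) as [d4 [Hd4 K4]].
  set (r1 := Rmin r (Rmin (Rmin d1 d2) (Rmin d3 d4))).
  assert (Hr1 : 0 < r1) by (unfold r1; repeat apply Rmin_pos; auto).
  assert (R1 : r1 <= r /\ r1 <= d1 /\ r1 <= d2 /\ r1 <= d3 /\ r1 <= d4).
  { unfold r1. pose proof (Rmin_l r (Rmin (Rmin d1 d2) (Rmin d3 d4))).
    pose proof (Rmin_r r (Rmin (Rmin d1 d2) (Rmin d3 d4))).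
    pose proof (Rmin_l (Rmin d1 d2) (Rmin d3 d4)). pose proof (Rmin_r (Rmin d1 d2) (Rmin d3 d4)).
    pose proof (Rmin_l d1 d2). pose proof (Rmin_r d1 d2).
    pose proof (Rmin_l d3 d4). pose proof (Rmin_r d3 d4). lra. }
  destruct R1 as [Rr [R1 [R2 [R3 R4]]]].
  destruct (transversal_local a1 a2 b1 b2 da1 da2 db1 db2 yA yB (da1 yA 0) (db1 yB 0) eta r1)
    as [eps0 [dA [dB [y1 [y2 [He0 [HdA [HdB [Y10 Hy]]]]]]]]]; auto.
  all: try (intros y e Hy He; assert (He' : Rabs (e - 0) < r1) by (rewrite Rminus_0_r; exact He)).
  all: try (destruct (HA y e) as (? & ? & ? & ?); [lra|lra|assumption]).
  all: try (destruct (HB y e) as (? & ? & ? & ?); [lra|lra|assumption]).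
  - apply K1; lra.
  - rewrite <- E2. apply K2; lra.
  - apply K3; lra.
  - rewrite <- F2. apply K4; lra.
  - exists eps0, dA, dB, y1, y2.
    split; [split; lra|]. split; [split; lra|]. split; [split; lra|]. split; [exact Y10|exact Hy].
Qed.

(** * Curves followed along a fixed itinerary *)

Section Itinerary.
Variables (d : nat) (lambda : nat -> R -> R) (pa pb : Rbar) (f : R -> R).
Hypothesis lambda_smooth : forall i, (i < d)%nat -> smooth_on (inP pa pb) (lambda i).
Hypothesis lambda_pos : forall i y, (i < d)%nat -> inP pa pb y -> 0 < lambda i y.
Hypothesis lambda_sum : forall y, inP pa pb y -> psum (fun i => lambda i y) d = 1.
Hypothesis f_smooth : forall n x, ex_derive_n f n x.
Variables (x0 dx0 : R -> R) (it : nat -> nat).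
Hypothesis x0_C1 : forall y, inP pa pb y ->
  is_derive x0 y (dx0 y) /\ continuous x0 y /\ continuous dx0 y.
Hypothesis it_valid : forall k, (it k < d)%nat.

Let om k y := omega_ d lambda (it k) y.

(* The orbit of [(x0 y, y)] computed as if step [k] used the translation of the elemental
   interval [it k]; unlike [T], this is smooth in [y]. *)
Fixpoint itin_orbit (k : nat) (y e : R) : R * R :=
  match k with
  | O => (x0 y, y)
  | S k => let x' := fst (itin_orbit k y e) + om k (snd (itin_orbit k y e)) in
           (x', snd (itin_orbit k y e) + e * f x')
  end.
Definition itin_x k y e := fst (itin_orbit k y e).
Definition itin_y k y e := snd (itin_orbit k y e).

Fixpoint itin_deriv (k : nat) (y e : R) : R * R :=
  match k with
  | O => (dx0 y, 1)
  | S k => let dx := fst (itin_deriv k y e)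
                     + Derive (om k) (itin_y k y e) * snd (itin_deriv k y e) in
           (dx, snd (itin_deriv k y e) + e * (Derive f (itin_x (S k) y e) * dx))
  end.
Definition itin_dx k y e := fst (itin_deriv k y e).
Definition itin_dy k y e := snd (itin_deriv k y e).

Lemma itin_y_unperturbed k y : itin_y k y 0 = y.
Proof.
  induction k as [|k IH]; auto. unfold itin_y in *; simpl. rewrite IH. ring.
Qed.

Lemma itin_dy_unperturbed k y : itin_dy k y 0 = 1.
Proof.
  induction k as [|k IH]; auto. unfold itin_dy in *; simpl. rewrite IH. ring.
Qed.

Lemma om_C1 k : C1_on pa pb (om k).
Proof. apply C1_omega; auto. Qed.

Lemma itin_derive k y e : (forall j, (j <= k)%nat -> inP pa pb (itin_y j y e)) ->
  is_derive (fun z => itin_x k z e) y (itin_dx k y e) /\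
  is_derive (fun z => itin_y k z e) y (itin_dy k y e).
Proof.
  induction k as [|k IH]; intros HP.
  - split; [apply x0_C1, (HP 0%nat); lia|].
    apply (is_derive_ext (fun z => z)); [reflexivity|]. apply (is_derive_id (K := R_AbsRing)).
  - destruct IH as [IX IY]; [intros; apply HP; lia|].
    assert (PY : inP pa pb (itin_y k y e)) by (apply HP; lia).
    assert (DXk : is_derive (fun z => itin_x (S k) z e) y (itin_dx (S k) y e)).
    { change (itin_dx (S k) y e) with
        (itin_dx k y e + Derive (om k) (itin_y k y e) * itin_dy k y e).
      rewrite Rmult_comm.
      apply (is_derive_ext (fun z => itin_x k z e + om k (itin_y k z e))); [reflexivity|].
      apply (is_derive_plus (fun z => itin_x k z e) (fun z => om k (itin_y k z e))); auto.
      apply (is_derive_comp (om k) (fun z => itin_y k z e)); auto.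
      apply (C1_on_is_derive pa pb); auto. apply om_C1. }
    split; auto.
    change (itin_dy (S k) y e) with
      (itin_dy k y e + e * (Derive f (itin_x (S k) y e) * itin_dx (S k) y e)).
    rewrite (Rmult_comm (Derive f _)).
    apply (is_derive_ext (fun z => itin_y k z e + e * f (itin_x (S k) z e))); [reflexivity|].
    apply (is_derive_plus (fun z => itin_y k z e) (fun z => e * f (itin_x (S k) z e))); auto.
    apply is_derive_scal, (is_derive_comp f (fun z => itin_x (S k) z e)); auto.
    apply Derive_correct, (f_smooth 1%nat).
Qed.

Lemma itin_cont2 k y e : (forall j, (j <= k)%nat -> inP pa pb (itin_y j y e)) ->
  cont2 (itin_x k) y e /\ cont2 (itin_y k) y e /\ cont2 (itin_dx k) y e /\ cont2 (itin_dy k) y e.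
Proof.
  induction k as [|k IH]; intros HP.
  - destruct (x0_C1 y (HP 0%nat ltac:(lia))) as [_ [C1 C2]].
    split; [exact (cont2_comp x0 (fun y _ => y) y e C1 (cont2_fst y e))|].
    split; [exact (cont2_fst y e)|].
    split; [exact (cont2_comp dx0 (fun y _ => y) y e C2 (cont2_fst y e))|].
    exact (cont2_const 1 y e).
  - destruct IH as [CX [CY [CDX CDY]]]; [intros; apply HP; lia|].
    assert (PY : inP pa pb (itin_y k y e)) by (apply HP; lia).
    assert (Cf : forall x, continuous f x).
    { intros x. apply (ex_derive_continuous (V := R_NormedModule)), (f_smooth 1%nat). }
    assert (Cdf : forall x, continuous (Derive f) x).
    { intros x. apply (ex_derive_continuous (V := R_NormedModule)), (f_smooth 2%nat). }
    assert (CXS : cont2 (itin_x (S k)) y e).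
    { apply (cont2_plus (itin_x k) (fun y e => om k (itin_y k y e))); auto.
      apply (cont2_comp (om k) (itin_y k)); auto.
      apply (C1_on_continuous pa pb); auto. apply om_C1. }
    assert (CDXS : cont2 (itin_dx (S k)) y e).
    { apply (cont2_plus (itin_dx k) (fun y e => Derive (om k) (itin_y k y e) * itin_dy k y e));
        auto.
      apply (cont2_mult (fun y e => Derive (om k) (itin_y k y e))); auto.
      apply (cont2_comp (Derive (om k)) (itin_y k)); auto. apply om_C1; auto. }
    split; [auto|]. split; [|split; [auto|]].
    + apply (cont2_plus (itin_y k) (fun y e => e * f (itin_x (S k) y e))); auto.
      apply (cont2_mult (fun _ e => e)); [apply cont2_snd|].
      apply (cont2_comp f (itin_x (S k))); auto.
    + apply (cont2_plus (itin_dy k)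
        (fun y e => e * (Derive f (itin_x (S k) y e) * itin_dx (S k) y e))); auto.
      apply (cont2_mult (fun _ e => e)); [apply cont2_snd|].
      apply (cont2_mult (fun y e => Derive f (itin_x (S k) y e))); auto.
      apply (cont2_comp (Derive f) (itin_x (S k))); auto.
Qed.

Lemma itin_orbit_iter k y e : (forall j, (j <= k)%nat -> inP pa pb (itin_y j y e)) ->
  (forall j, (j < k)%nat -> in_elem d lambda (it j) (Nat.iter j (T d lambda f e) (x0 y, y))) ->
  Nat.iter k (T d lambda f e) (x0 y, y) = itin_orbit k y e.
Proof.
  induction k as [|k IH]; intros HP HE; [reflexivity|].
  assert (IHk : Nat.iter k (T d lambda f e) (x0 y, y) = itin_orbit k y e).
  { apply IH; intros; [apply HP|apply HE]; lia. }
  simpl Nat.iter. rewrite IHk.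
  destruct (HE k ltac:(lia)) as [Hi HJ]. rewrite IHk in HJ.
  rewrite (surjective_pairing (itin_orbit k y e)).
  unfold T; simpl. rewrite (F_on_J d lambda pa pb lambda_pos lambda_sum _ (it k)); auto.
  apply (HP k); lia.
Qed.

End Itinerary.

Lemma uniform_itinerary d (P : nat -> nat -> R -> R -> Prop) (ys : R) n : (0 < d)%nat ->
  (forall k, (k < n)%nat -> exists i del, 0 < del /\ forall y e,
     Rabs (y - ys) < del -> Rabs e < del -> (i < d)%nat /\ P k i y e) ->
  exists (it : nat -> nat) del, 0 < del /\ (forall k, (it k < d)%nat) /\
    forall k, (k < n)%nat -> forall y e, Rabs (y - ys) < del -> Rabs e < del -> P k (it k) y e.
Proof.
  intros Hd. induction n as [|n IH]; intros H.
  - exists (fun _ => 0%nat), 1. split; [lra|]. split; [auto|]. intros; lia.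
  - destruct IH as [it [del [Hdel [Hit Hk]]]]; [intros; apply H; lia|].
    destruct (H n (Nat.lt_succ_diag_r n)) as [i [del' [Hdel' Hi]]].
    assert (Hid : (i < d)%nat).
    { apply (Hi ys 0); [rewrite Rminus_eq_0|]; rewrite Rabs_R0; lra. }
    exists (fun k => if Nat.eq_dec k n then i else it k), (Rmin del del').
    split; [apply Rmin_pos; auto|]. split.
    + intros k. destruct (Nat.eq_dec k n); auto.
    + intros k Hkn y e Hy He. pose proof (Rmin_l del del'); pose proof (Rmin_r del del').
      destruct (Nat.eq_dec k n) as [->|Hne]; [apply Hi; lra|apply Hk; try lra; lia].
Qed.

Definition gamma_dx (lambda : nat -> R -> R) (c : curve) (y : R) : R :=
  match c with cur_mid i => Derive (m_ lambda i) y | _ => 0 end.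

Lemma gamma_pair lambda c y : gamma lambda c y = (fst (gamma lambda c y), y).
Proof. destruct c; reflexivity. Qed.

Section InteriorStability.
Variables (d : nat) (lambda : nat -> R -> R) (pa pb : Rbar) (f : R -> R).
Hypothesis lambda_smooth : forall i, (i < d)%nat -> smooth_on (inP pa pb) (lambda i).
Hypothesis lambda_pos : forall i y, (i < d)%nat -> inP pa pb y -> 0 < lambda i y.
Hypothesis lambda_sum : forall y, inP pa pb y -> psum (fun i => lambda i y) d = 1.
Hypothesis f_smooth : forall n x, ex_derive_n f n x.

Lemma cont2_interior_stable (u v : R -> R -> R) y e i : (i < d)%nat -> cont2 u y e -> cont2 v y e ->
  inP pa pb (v y e) ->
  a_ lambda i (v y e) < u y e < a_ lambda i (v y e) + lambda i (v y e) ->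
  exists del, 0 < del /\ forall y' e', Rabs (y' - y) < del -> Rabs (e' - e) < del ->
    inP pa pb (v y' e') /\
    a_ lambda i (v y' e') < u y' e' < a_ lambda i (v y' e') + lambda i (v y' e').
Proof.
  intros Hi Cu Cv Pv [I1 I2].
  destruct (cont2_inP_stable pa pb v y e Cv Pv) as [d0 [Hd0 H0]].
  assert (Ca : continuous (a_ lambda i) (v y e)).
  { apply (C1_on_continuous pa pb); auto. apply (C1_a d); auto; lia. }
  assert (Cl : continuous (lambda i) (v y e)).
  { apply (C1_on_continuous pa pb); auto. apply C1_on_smooth; auto. }
  assert (C1 : cont2 (fun y e => u y e - a_ lambda i (v y e)) y e).
  { apply cont2_minus; auto. apply (cont2_comp (a_ lambda i) v); auto. }
  assert (C2 : cont2 (fun y e => a_ lambda i (v y e) + lambda i (v y e) - u y e) y e).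
  { apply cont2_minus; auto.
    apply cont2_plus; [apply (cont2_comp (a_ lambda i) v)|apply (cont2_comp (lambda i) v)]; auto. }
  destruct (cont2_pos _ _ _ C1 ltac:(lra)) as [d1 [Hd1 K1]].
  destruct (cont2_pos _ _ _ C2 ltac:(lra)) as [d2 [Hd2 K2]].
  exists (Rmin d0 (Rmin d1 d2)). split; [repeat apply Rmin_pos; auto|].
  intros y' e' Hy He. pose proof (Rmin_l d0 (Rmin d1 d2)); pose proof (Rmin_r d0 (Rmin d1 d2)).
  pose proof (Rmin_l d1 d2); pose proof (Rmin_r d1 d2).
  split; [apply H0; lra|]. specialize (K1 y' e' ltac:(lra) ltac:(lra)).
  specialize (K2 y' e' ltac:(lra) ltac:(lra)). lra.
Qed.

Lemma T_cont2_at_interior (u v : R -> R -> R) y e i : (i < d)%nat -> cont2 u y e -> cont2 v y e ->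
  inP pa pb (v y e) ->
  a_ lambda i (v y e) < u y e < a_ lambda i (v y e) + lambda i (v y e) ->
  cont2 (fun y e => fst (T d lambda f e (u y e, v y e))) y e /\
  cont2 (fun y e => snd (T d lambda f e (u y e, v y e))) y e.
Proof.
  intros Hi Cu Cv Pv I.
  destruct (cont2_interior_stable u v y e i Hi Cu Cv Pv I) as [d0 [Hd0 H0]].
  assert (Eq : forall y' e', Rabs (y' - y) < d0 -> Rabs (e' - e) < d0 ->
    T d lambda f e' (u y' e', v y' e') = (u y' e' + omega_ d lambda i (v y' e'),
       v y' e' + e' * f (u y' e' + omega_ d lambda i (v y' e')))).
  { intros y' e' Hy He. destruct (H0 y' e' Hy He) as [P1 P2].
    apply (T_on_J d lambda pa pb f lambda_pos lambda_sum); auto. unfold inJ; lra. }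
  assert (Co : continuous (omega_ d lambda i) (v y e)).
  { apply (C1_on_continuous pa pb); auto. apply (C1_omega d); auto. }
  assert (Cx : cont2 (fun y e => u y e + omega_ d lambda i (v y e)) y e).
  { apply cont2_plus; auto. apply (cont2_comp (omega_ d lambda i) v); auto. }
  split.
  - apply (cont2_ext _ (fun y e => u y e + omega_ d lambda i (v y e))); auto.
    exists d0; split; auto. intros y' e' Hy He. rewrite Eq; auto.
  - apply (cont2_ext _ (fun y e => v y e + e * f (u y e + omega_ d lambda i (v y e)))).
    { exists d0; split; auto. intros y' e' Hy He. rewrite Eq; auto. }
    apply cont2_plus; auto. apply (cont2_mult (fun _ e => e)); [apply cont2_snd|].
    apply (cont2_comp f (fun y e => u y e + omega_ d lambda i (v y e))); auto.
    apply (ex_derive_continuous (V := R_NormedModule)), (f_smooth 1%nat).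
Qed.

End InteriorStability.

Definition iterate_family (d : nat) (pa pb : Rbar) (lambda : nat -> R -> R) (f : R -> R)
  (g : curve) (n : nat) (y0 u : R) (a1 a2 da1 da2 : R -> R -> R) (r0 : R) : Prop :=
  0 < r0 /\ C1_family a1 a2 da1 da2 y0 r0 /\
  (forall y e, Rabs (y - y0) < r0 -> Rabs e < r0 ->
     Nat.iter n (T d lambda f e) (gamma lambda g y) = (a1 y e, a2 y e) /\ inP pa pb y /\
     forall m, (m < n)%nat ->
       interior_pt d lambda pa pb (Nat.iter m (T d lambda f e) (gamma lambda g y))) /\
  cont2 da1 y0 0 /\ cont2 da2 y0 0 /\ da1 y0 0 = u /\ da2 y0 0 = 1 /\
  (a1 y0 0, a2 y0 0) = Nat.iter n (T d lambda f 0) (gamma lambda g y0).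

Section CurveFamily.
Variables (d : nat) (pa pb : Rbar) (lambda : nat -> R -> R) (f : R -> R)
  (y0 : R) (q : nat) (l r : R).
Hypothesis lambda_smooth : forall i, (i < d)%nat -> smooth_on (inP pa pb) (lambda i).
Hypothesis lambda_pos : forall i y, (i < d)%nat -> inP pa pb y -> 0 < lambda i y.
Hypothesis lambda_sum : forall y, inP pa pb y -> psum (fun i => lambda i y) d = 1.
Hypothesis f_smooth : forall n x, ex_derive_n f n x.
Hypothesis Py0 : inP pa pb y0.
Hypothesis Hper : periodic_interval d lambda y0 q l r.
Variables (g : curve) (n k0 : nat).
Hypothesis g_valid : valid_curve d g.
Hypothesis g_hits : Nat.iter n (F d lambda y0) (fst (gamma lambda g y0))
                    = Nat.iter k0 (F d lambda y0) ((l + r) / 2).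

Let x0 := fun y => fst (gamma lambda g y).
Let Te e := T d lambda f e.

Lemma gamma_x_C1 y : inP pa pb y ->
  is_derive x0 y (gamma_dx lambda g y) /\ continuous x0 y /\ continuous (gamma_dx lambda g) y.
Proof.
  intros Py. unfold x0. destruct g as [| |i]; simpl.
  1,2: split; [apply (is_derive_const (V := R_NormedModule))|split; apply continuous_const].
  split; [|split].
  - apply (C1_on_is_derive pa pb); auto. apply (C1_m d); auto.
  - apply (C1_on_continuous pa pb); auto. apply (C1_m d); auto.
  - exact (proj2 (C1_m d lambda pa pb lambda_smooth i g_valid y Py)).
Qed.

Lemma gamma_x_range : 0 <= x0 y0 < 1.
Proof.
  unfold x0. destruct g as [| |i]; simpl; try lra.
  destruct (J_bounds d lambda pa pb lambda_pos lambda_sum y0 i Py0 g_valid) as [B1 [B2 B3]].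
  unfold m_. lra.
Qed.

Section FixedItinerary.
Variables (it : nat -> nat) (D1 : R).
Hypothesis it_valid : forall k, (it k < d)%nat.
Hypothesis D1_pos : 0 < D1.
Hypothesis it_followed : forall k, (k < n)%nat -> forall y e,
  Rabs (y - y0) < D1 -> Rabs e < D1 ->
  in_elem d lambda (it k) (Nat.iter k (Te e) (gamma lambda g y)).

Let X := itin_x d lambda f x0 it.
Let Y := itin_y d lambda f x0 it.

Lemma itin_inP_near : exists D2, 0 < D2 /\ forall y e, Rabs (y - y0) < D2 -> Rabs e < D2 ->
  forall j, (j <= n)%nat -> inP pa pb (Y j y e).
Proof.
  destruct (common_radius (fun j del => forall y e, Rabs (y - y0) < del -> Rabs (e - 0) < del ->
      inP pa pb (Y j y e)) n) as [D2 [HD2 HP]].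
  - intros j del del' H [H1 H2] y e Hy He. apply H; lra.
  - intros j Hj. apply cont2_inP_stable.
    + apply (itin_cont2 d lambda pa pb f lambda_smooth f_smooth x0 (gamma_dx lambda g) it
               gamma_x_C1 it_valid j y0 0).
      intros; unfold Y; rewrite itin_y_unperturbed; auto.
    + unfold Y; rewrite itin_y_unperturbed; auto.
  - exists D2; split; auto. intros y e Hy He j Hj. apply HP; auto. rewrite Rminus_0_r; auto.
Qed.

Section Radius.
Variable D2 : R.
Hypothesis D2_pos : 0 < D2.
Hypothesis D2_inP : forall y e, Rabs (y - y0) < D2 -> Rabs e < D2 ->
  forall j, (j <= n)%nat -> inP pa pb (Y j y e).

Lemma itin_matches_T k y e : (k <= n)%nat -> Rabs (y - y0) < Rmin D1 D2 -> Rabs e < Rmin D1 D2 ->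
  Nat.iter k (Te e) (gamma lambda g y) = (X k y e, Y k y e).
Proof.
  intros Hk Hy He. pose proof (Rmin_l D1 D2); pose proof (Rmin_r D1 D2).
  rewrite gamma_pair. unfold X, Y, itin_x, itin_y. rewrite <- surjective_pairing.
  apply (itin_orbit_iter d lambda pa pb f lambda_pos lambda_sum x0 it k y e).
  - intros j Hj. apply D2_inP; lra || lia.
  - intros j Hj. change (x0 y, y) with (fst (gamma lambda g y), y). rewrite <- gamma_pair.
    apply it_followed; lra || lia.
Qed.

(* At [(y0, 0)] the iterates run through the orbit of the midpoint, which stays away from
   the endpoints of the elemental subintervals. *)
Lemma itin_interior_base m : (m < n)%nat ->
  a_ lambda (it m) y0 < X m y0 0 < a_ lambda (it m) y0 + lambda (it m) y0.
Proof.
  intros Hm.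
  assert (Hb : Rabs (y0 - y0) < Rmin D1 D2 /\ Rabs 0 < Rmin D1 D2)
    by (rewrite Rminus_eq_0, Rabs_R0; split; apply Rmin_pos; auto).
  assert (EX : X m y0 0 = Nat.iter m (F d lambda y0) (x0 y0)).
  { pose proof (itin_matches_T m y0 0 ltac:(lia) (proj1 Hb) (proj2 Hb)) as E.
    unfold Te in E. rewrite gamma_pair, (T0_iter d lambda f) in E. injection E as E _. auto. }
  destruct (preimage_in_midpoint_orbit d lambda pa pb lambda_pos lambda_sum y0 q l r Py0 Hper
              (x0 y0) n k0 m gamma_x_range g_hits ltac:(lia)) as [m' Hm'].
  destruct (midpoint_orbit_interior d lambda pa pb lambda_pos lambda_sum y0 q l r Py0 Hper m')
    as [i [Hi Hint]].
  destruct (it_followed m Hm y0 0) as [_ HJ]; try apply (Rlt_le_trans _ _ _ (proj1 Hb)), Rmin_l;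
    try apply (Rlt_le_trans _ _ _ (proj2 Hb)), Rmin_l.
  rewrite itin_matches_T in HJ by (lia || apply Hb). simpl in HJ.
  unfold Y in HJ. rewrite itin_y_unperturbed, EX, Hm' in HJ. rewrite EX, Hm'.
  replace (it m) with i; auto.
  apply (J_unique d lambda pa pb lambda_pos y0 i (it m)
           (Nat.iter m' (F d lambda y0) ((l + r) / 2)));
    auto. unfold inJ; lra.
Qed.

Lemma itin_interior_near : exists D3, 0 < D3 /\ forall m, (m < n)%nat -> forall y e,
  Rabs (y - y0) < D3 -> Rabs e < D3 ->
  inP pa pb (Y m y e) /\
  a_ lambda (it m) (Y m y e) < X m y e < a_ lambda (it m) (Y m y e) + lambda (it m) (Y m y e).
Proof.
  destruct (common_radius (fun m del => (m < n)%nat -> forall y e,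
      Rabs (y - y0) < del -> Rabs (e - 0) < del -> inP pa pb (Y m y e) /\
      a_ lambda (it m) (Y m y e) < X m y e
      < a_ lambda (it m) (Y m y e) + lambda (it m) (Y m y e)) n)
    as [D3 [HD3 HI]].
  - intros j del del' H [H1 H2] Hj y e Hy He. apply H; auto; lra.
  - intros m Hm. destruct (le_lt_dec n m) as [Hle|Hlt]; [exists 1; split; [lra|]; intros; lia|].
    destruct (itin_cont2 d lambda pa pb f lambda_smooth f_smooth x0 (gamma_dx lambda g) it
                gamma_x_C1 it_valid m y0 0) as [CX [CY _]].
    { intros; unfold Y; rewrite itin_y_unperturbed; auto. }
    destruct (cont2_interior_stable d lambda pa pb lambda_smooth (X m) (Y m) y0 0 (it m)
                (it_valid m)
                CX CY) as [del [Hdel H]].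
    + unfold Y; rewrite itin_y_unperturbed; auto.
    + unfold Y; rewrite itin_y_unperturbed. apply itin_interior_base; auto.
    + exists del; split; auto.
  - exists D3. split; auto. intros m Hm y e Hy He. apply HI; auto; [lia|rewrite Rminus_0_r; auto].
Qed.

End Radius.

Lemma curve_family_fixed_itinerary u :
  is_derive (fun y => fst (Nat.iter n (Te 0) (gamma lambda g y))) y0 u ->
  exists (a1 a2 da1 da2 : R -> R -> R) r0,
    iterate_family d pa pb lambda f g n y0 u a1 a2 da1 da2 r0.
Proof.
  intros Hu.
  destruct itin_inP_near as [D2 [HD2 HP]].
  destruct (itin_interior_near D2 HD2 HP) as [D3 [HD3 HI]].
  set (r0 := Rmin (Rmin D1 D2) D3).
  assert (Hr0 : 0 < r0 /\ r0 <= Rmin D1 D2 /\ r0 <= D2 /\ r0 <= D3).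
  { unfold r0. pose proof (Rmin_l (Rmin D1 D2) D3). pose proof (Rmin_r (Rmin D1 D2) D3).
    pose proof (Rmin_r D1 D2). repeat split; try lra. repeat apply Rmin_pos; auto. }
  destruct Hr0 as [Hr0 [R1 [R2 R3]]].
  set (DX := itin_dx d lambda f x0 (gamma_dx lambda g) it).
  set (DY := itin_dy d lambda f x0 (gamma_dx lambda g) it).
  assert (HPb : forall y e, Rabs (y - y0) < r0 -> Rabs e < r0 ->
            forall j, (j <= n)%nat -> inP pa pb (Y j y e)) by (intros; apply HP; lra || lia).
  assert (HPbase : forall j, (j <= n)%nat -> inP pa pb (Y j y0 0)).
  { intros j Hj. unfold Y; rewrite itin_y_unperturbed; auto. }
  assert (Match : forall y e, Rabs (y - y0) < r0 -> Rabs e < r0 -> forall k, (k <= n)%nat ->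
            Nat.iter k (Te e) (gamma lambda g y) = (X k y e, Y k y e)).
  { intros y e Hy He k Hk. apply (itin_matches_T D2); auto; lra. }
  assert (Hb : Rabs (y0 - y0) < r0 /\ Rabs 0 < r0) by (rewrite Rminus_eq_0, Rabs_R0; lra).
  destruct (itin_cont2 d lambda pa pb f lambda_smooth f_smooth x0 (gamma_dx lambda g) it
              gamma_x_C1 it_valid n y0 0 HPbase) as [_ [_ [CDX CDY]]].
  exists (X n), (Y n), (DX n), (DY n), r0.
  split; [auto|]. split; [|split; [|split; [auto|split; [auto|]]]].
  - intros y e Hy He.
    destruct (itin_derive d lambda pa pb f lambda_smooth f_smooth x0 (gamma_dx lambda g) it
                gamma_x_C1 it_valid n y e (HPb y e Hy He)) as [Dx Dy].
    destruct (itin_cont2 d lambda pa pb f lambda_smooth f_smooth x0 (gamma_dx lambda g) it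
                gamma_x_C1 it_valid n y e (HPb y e Hy He)) as [CX [CY _]].
    split; [exact Dx|split; [exact Dy|split; assumption]].
  - intros y e Hy He. split; [apply Match; auto|]. split.
    + pose proof (HPb y e Hy He 0%nat ltac:(lia)). auto.
    + intros m Hm. rewrite Match by (auto; lia). destruct (HI m Hm y e ltac:(lra) ltac:(lra)).
      exists (it m). auto.
  - split; [|split].
    + destruct (itin_derive d lambda pa pb f lambda_smooth f_smooth x0 (gamma_dx lambda g) it
                  gamma_x_C1 it_valid n y0 0 HPbase) as [Dx _].
      unfold DX. rewrite <- (is_derive_unique _ _ _ Dx). apply is_derive_unique.
      apply (is_derive_ext_loc (fun y => fst (Nat.iter n (Te 0) (gamma lambda g y)))); auto.
      exists (mkposreal r0 Hr0). intros z Hz. rewrite Match; auto. apply Hb.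
    + apply itin_dy_unperturbed.
    + symmetry. apply Match; auto; apply Hb.
Qed.

End FixedItinerary.

Lemma curve_family u :
  (forall k, (k < n)%nat -> exists i del, 0 < del /\ forall y e,
     Rabs (y - y0) < del -> Rabs e < del ->
     in_elem d lambda i (Nat.iter k (Te e) (gamma lambda g y))) ->
  is_derive (fun y => fst (Nat.iter n (Te 0) (gamma lambda g y))) y0 u ->
  exists (a1 a2 da1 da2 : R -> R -> R) r0,
    iterate_family d pa pb lambda f g n y0 u a1 a2 da1 da2 r0.
Proof.
  intros Hloc Hu.
  destruct (uniform_itinerary d
              (fun k i y e => in_elem d lambda i (Nat.iter k (Te e) (gamma lambda g y))) y0 n)
    as [it [D1 [HD1 [Hit Hfol]]]].
  - eapply dim_pos; eauto.
  - intros k Hk. destruct (Hloc k Hk) as [i [del [Hdel H]]]. exists i, del. split; auto.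
    intros y e Hy He. specialize (H y e Hy He). split; auto. apply H.
  - exact (curve_family_fixed_itinerary it D1 Hit HD1 Hfol u Hu).
Qed.

End CurveFamily.

(** * Continuation of the symmetric periodic orbit *)

Lemma cont2_pair_separation u1 v1 u2 v2 y e :
  cont2 u1 y e -> cont2 v1 y e -> cont2 u2 y e -> cont2 v2 y e ->
  (u1 y e, v1 y e) <> (u2 y e, v2 y e) ->
  exists del, 0 < del /\ forall y' e', Rabs (y' - y) < del -> Rabs (e' - e) < del ->
    (u1 y' e', v1 y' e') <> (u2 y' e', v2 y' e').
Proof.
  intros C1 C2 C3 C4 Hne.
  set (dist2 := fun y e => (u1 y e - u2 y e) * (u1 y e - u2 y e)
                           + (v1 y e - v2 y e) * (v1 y e - v2 y e)).
  assert (Cd : cont2 dist2 y e).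
  { unfold dist2. apply cont2_plus; apply cont2_mult; apply cont2_minus; auto. }
  assert (Hd : 0 < dist2 y e).
  { unfold dist2.
    pose proof (Rle_0_sqr (u1 y e - u2 y e)). pose proof (Rle_0_sqr (v1 y e - v2 y e)).
    destruct (Req_dec (u1 y e) (u2 y e)) as [E1|E1].
    - destruct (Req_dec (v1 y e) (v2 y e)) as [E2|E2]; [exfalso; apply Hne; rewrite E1, E2; auto|].
      pose proof (Rsqr_pos_lt (v1 y e - v2 y e) ltac:(lra)). unfold Rsqr in *. lra.
    - pose proof (Rsqr_pos_lt (u1 y e - u2 y e) ltac:(lra)). unfold Rsqr in *. lra. }
  destruct (cont2_pos dist2 y e Cd Hd) as [del [Hdel H]]. exists del; split; auto.
  intros y' e' Hy He E. specialize (H y' e' Hy He). unfold dist2 in H.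
  injection E as E1 E2. rewrite E1, E2, !Rminus_eq_0 in H. lra.
Qed.

Section Continuation.
Variables (d : nat) (pa pb : Rbar) (lambda : nat -> R -> R) (f : R -> R)
  (y0 : R) (q : nat) (l r : R) (k0 : nat).
Hypothesis lambda_smooth : forall i, (i < d)%nat -> smooth_on (inP pa pb) (lambda i).
Hypothesis lambda_pos : forall i y, (i < d)%nat -> inP pa pb y -> 0 < lambda i y.
Hypothesis lambda_sum : forall y, inP pa pb y -> psum (fun i => lambda i y) d = 1.
Hypothesis f_smooth : forall n x, ex_derive_n f n x.
Hypothesis Py0 : inP pa pb y0.
Hypothesis Hper : periodic_interval d lambda y0 q l r.

Let Te e := T d lambda f e.
Let pstar := Nat.iter k0 (Te 0) ((l + r) / 2, y0).

Lemma pstar_orbit k :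
  Nat.iter k (Te 0) pstar = (Nat.iter (k + k0) (F d lambda y0) ((l + r) / 2), y0).
Proof. unfold pstar, Te; cbv beta. rewrite <- Nat.iter_add, (T0_iter d lambda f). reflexivity. Qed.

Lemma pstar_orbit_interior k : interior_pt d lambda pa pb (Nat.iter k (Te 0) pstar).
Proof.
  rewrite pstar_orbit.
  destruct (midpoint_orbit_interior d lambda pa pb lambda_pos lambda_sum y0 q l r Py0 Hper (k + k0))
    as [i [Hi H]].
  exists i. simpl. auto.
Qed.

Lemma pstar_orbit_distinct k : (0 < k < q)%nat -> Nat.iter k (Te 0) pstar <> pstar.
Proof.
  intros Hk E. rewrite pstar_orbit in E. change pstar with (Nat.iter 0 (Te 0) pstar) in E.
  rewrite pstar_orbit in E. injection E as E.
  apply (midpoint_minimal d lambda pa pb lambda_pos lambda_sum y0 q l r Py0 Hper k Hk).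
  pose proof (midpoint_orbit_range d lambda pa pb lambda_pos lambda_sum y0 q l r Py0 Hper) as Hr.
  apply (F_iter_inj d lambda pa pb lambda_pos lambda_sum y0 k0); auto; [exact (Hr 0%nat)|].
  rewrite <- Nat.iter_add, Nat.add_comm. auto.
Qed.

Section Perturbed.
Variable pe : R -> R * R.
Hypothesis pe_fst_cont : continuous (fun e => fst (pe e)) 0.
Hypothesis pe_snd_cont : continuous (fun e => snd (pe e)) 0.
Hypothesis pe_base : pe 0 = pstar.

Let G k e := Nat.iter k (Te e) (pe e).

Lemma perturbed_orbit_cont2 k : cont2 (fun _ e => fst (G k e)) 0 0 /\
  cont2 (fun _ e => snd (G k e)) 0 0 /\ G k 0 = Nat.iter k (Te 0) pstar.
Proof.
  induction k as [|k [IH1 [IH2 IH3]]].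
  - split; [|split]; [apply cont2_of_continuous_e; auto..|apply pe_base].
  - destruct (pstar_orbit_interior k) as [i [Hi [HP HI]]]. rewrite <- IH3 in HP, HI.
    destruct (T_cont2_at_interior d lambda pa pb f lambda_smooth lambda_pos lambda_sum f_smooth
                (fun _ e => fst (G k e)) (fun _ e => snd (G k e)) 0 0 i Hi IH1 IH2 HP HI)
      as [S1 S2].
    split; [|split].
    + apply (cont2_ext _ (fun _ e => fst (Te e (fst (G k e), snd (G k e))))); auto.
      exists 1; split; [lra|]. intros. rewrite <- surjective_pairing. reflexivity.
    + apply (cont2_ext _ (fun _ e => snd (Te e (fst (G k e), snd (G k e))))); auto.
      exists 1; split; [lra|]. intros. rewrite <- surjective_pairing. reflexivity.
    + unfold G in *. simpl. rewrite IH3. reflexivity.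
Qed.

Lemma perturbed_orbit_interior : exists del, 0 < del /\ forall e, Rabs e < del ->
  forall k, (k <= q)%nat -> interior_pt d lambda pa pb (G k e).
Proof.
  destruct (common_radius (fun k del => forall e, Rabs (e - 0) < del ->
              interior_pt d lambda pa pb (G k e)) q) as [D [HD HI]].
  - intros j del del' H [H1 H2] e He. apply H; lra.
  - intros k Hk. destruct (perturbed_orbit_cont2 k) as [C1 [C2 C3]].
    destruct (pstar_orbit_interior k) as [i [Hi [HP HI]]]. rewrite <- C3 in HP, HI.
    destruct (cont2_interior_stable d lambda pa pb lambda_smooth (fun _ e => fst (G k e))
                (fun _ e => snd (G k e)) 0 0 i Hi C1 C2 HP HI) as [del [Hdel H]].
    exists del; split; auto. intros e He.
    destruct (H 0 e) as [P1 P2]; [rewrite Rminus_eq_0, Rabs_R0; lra|auto|]. exists i. auto.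
  - exists D. split; auto. intros e He k Hk. apply HI; auto. rewrite Rminus_0_r; auto.
Qed.

Lemma perturbed_orbit_distinct : exists del, 0 < del /\ forall e, Rabs e < del ->
  forall k, (0 < k < q)%nat -> G k e <> G 0%nat e.
Proof.
  destruct (common_radius (fun k del => (0 < k < q)%nat -> forall e, Rabs (e - 0) < del ->
              G k e <> G 0%nat e) q) as [D [HD HDist]].
  - intros j del del' H [H1 H2] Hjq e He. apply H; auto; lra.
  - intros k Hk. destruct (lt_dec 0 k) as [Hk0|Hk0]; [destruct (lt_dec k q) as [Hkq|Hkq]|].
    2,3: exists 1; split; [lra|]; intros; lia.
    destruct (perturbed_orbit_cont2 k) as [C1 [C2 C3]].
    destruct (perturbed_orbit_cont2 0) as [C4 [C5 C6]].
    destruct (cont2_pair_separation _ _ _ _ 0 0 C1 C2 C4 C5) as [del [Hdel H]].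
    + rewrite <- !surjective_pairing, C3, C6. apply pstar_orbit_distinct; lia.
    + exists del; split; auto. intros _ e He E.
      apply (H 0 e); [rewrite Rminus_eq_0, Rabs_R0; lra|auto|].
      rewrite <- !surjective_pairing. auto.
  - exists D. split; auto. intros e He k Hk. apply HDist; auto; [lia|rewrite Rminus_0_r; auto].
Qed.

End Perturbed.
End Continuation.

Lemma unperturbed_height d lambda f c n y :
  snd (Nat.iter n (T d lambda f 0) (gamma lambda c y)) = y.
Proof. rewrite gamma_pair, (T0_iter d lambda f). reflexivity. Qed.

Lemma unperturbed_height_derive d lambda f c n y u :
  is_derive (fun y => snd (Nat.iter n (T d lambda f 0) (gamma lambda c y))) y u -> u = 1.
Proof.
  intros H. apply (is_derive_ext _ (fun y => y)) in H; [|intros; apply unperturbed_height].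
  apply is_derive_unique in H. rewrite <- H. apply Derive_id.
Qed.

Section Main.
Variables (d : nat) (pa pb : Rbar) (lambda : nat -> R -> R) (f : R -> R)
  (y0 : R) (q : nat) (l r : R) (k0 : nat) (gA gB : curve) (nA nB : nat).
Hypothesis lambda_smooth : forall i, (i < d)%nat -> smooth_on (inP pa pb) (lambda i).
Hypothesis lambda_pos : forall i y, (i < d)%nat -> inP pa pb y -> 0 < lambda i y.
Hypothesis lambda_sum : forall y, inP pa pb y -> psum (fun i => lambda i y) d = 1.
Hypothesis f_smooth : forall n x, ex_derive_n f n x.
Hypothesis f_periodic : forall x, f (x + 1) = f x.
Hypothesis f_odd : forall x, f (- x) = - f x.
Hypothesis Py0 : inP pa pb y0.
Hypothesis Hper : periodic_interval d lambda y0 q l r.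
Hypothesis gA_valid : valid_curve d gA.
Hypothesis gB_valid : valid_curve d gB.
Hypothesis j_gap : Z.abs (jval gA nA - jval gB nB) = Z.of_nat q.

Let Te e := T d lambda f e.
Let pstar := Nat.iter k0 (Te 0) ((l + r) / 2, y0).

Lemma hits_midpoint_orbit g n : Nat.iter n (Te 0) (gamma lambda g y0) = pstar ->
  Nat.iter n (F d lambda y0) (fst (gamma lambda g y0)) = Nat.iter k0 (F d lambda y0) ((l + r) / 2).
Proof.
  unfold pstar, Te. rewrite gamma_pair, !(T0_iter d lambda f). intros E. injection E as E. exact E.
Qed.

Hypothesis gA_hits : Nat.iter nA (Te 0) (gamma lambda gA y0) = pstar.
Hypothesis gB_hits : Nat.iter nB (Te 0) (gamma lambda gB y0) = pstar.
Hypothesis gA_itinerary : forall k, (k < nA)%nat -> exists i delta, 0 < delta /\ forall y e,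
  Rabs (y - y0) < delta -> Rabs e < delta ->
  in_elem d lambda i (Nat.iter k (Te e) (gamma lambda gA y)).
Hypothesis gB_itinerary : forall k, (k < nB)%nat -> exists i delta, 0 < delta /\ forall y e,
  Rabs (y - y0) < delta -> Rabs e < delta ->
  in_elem d lambda i (Nat.iter k (Te e) (gamma lambda gB y)).
Hypothesis transversal : exists uA1 uA2 uB1 uB2,
  is_derive (fun y => fst (Nat.iter nA (Te 0) (gamma lambda gA y))) y0 uA1 /\
  is_derive (fun y => snd (Nat.iter nA (Te 0) (gamma lambda gA y))) y0 uA2 /\
  is_derive (fun y => fst (Nat.iter nB (Te 0) (gamma lambda gB y))) y0 uB1 /\
  is_derive (fun y => snd (Nat.iter nB (Te 0) (gamma lambda gB y))) y0 uB2 /\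
  (forall s t, s * uA1 + t * uB1 = 0 -> s * uA2 + t * uB2 = 0 -> s = 0 /\ t = 0).

Lemma curves_intersection : exists eps1 dA dB (y1 y2 : R -> R) (pe : R -> R * R),
  0 < eps1 /\ 0 < dA /\ 0 < dB /\ pe 0 = pstar /\
  forall e, Rabs e < eps1 ->
    Rabs (y1 e - y0) < dA /\ Rabs (y2 e - y0) < dB /\ inP pa pb (y1 e) /\ inP pa pb (y2 e) /\
    pe e = Nat.iter nA (Te e) (gamma lambda gA (y1 e)) /\
    pe e = Nat.iter nB (Te e) (gamma lambda gB (y2 e)) /\
    (forall m, (m < nA)%nat ->
       interior_pt d lambda pa pb (Nat.iter m (Te e) (gamma lambda gA (y1 e)))) /\
    (forall m, (m < nB)%nat ->
       interior_pt d lambda pa pb (Nat.iter m (Te e) (gamma lambda gB (y2 e)))) /\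
    (forall y y', Rabs (y - y0) < dA -> Rabs (y' - y0) < dB ->
       Nat.iter nA (Te e) (gamma lambda gA y) = Nat.iter nB (Te e) (gamma lambda gB y') ->
       Nat.iter nA (Te e) (gamma lambda gA y) = pe e) /\
    continuous (fun e => fst (pe e)) e /\ continuous (fun e => snd (pe e)) e.
Proof.
  destruct transversal as [uA1 [uA2 [uB1 [uB2 [DA1 [DA2 [DB1 [DB2 Hind]]]]]]]].
  apply unperturbed_height_derive in DA2. apply unperturbed_height_derive in DB2.
  assert (Hne : uA1 <> uB1).
  { intros E. destruct (Hind 1 (-1)) as [H1 _]; [rewrite E|rewrite DA2, DB2|]; lra. }
  destruct (curve_family d pa pb lambda f y0 q l r lambda_smooth lambda_pos lambda_sum f_smooth
              Py0 Hper gA nA k0 gA_valid (hits_midpoint_orbit gA nA gA_hits) uA1 gA_itinerary DA1)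
    as [a1 [a2 [da1 [da2 [rA [HrA [FamA [CurA [CA1 [CA2 [EA1 [EA2 A0]]]]]]]]]]]].
  destruct (curve_family d pa pb lambda f y0 q l r lambda_smooth lambda_pos lambda_sum f_smooth
              Py0 Hper gB nB k0 gB_valid (hits_midpoint_orbit gB nB gB_hits) uB1 gB_itinerary DB1)
    as [b1 [b2 [db1 [db2 [rB [HrB [FamB [CurB [CB1 [CB2 [EB1 [EB2 B0]]]]]]]]]]]].
  assert (A0' : (a1 y0 0, a2 y0 0) = pstar) by (rewrite A0; exact gA_hits).
  assert (Hbase : a1 y0 0 = b1 y0 0 /\ a2 y0 0 = b2 y0 0).
  { assert (E : (a1 y0 0, a2 y0 0) = (b1 y0 0, b2 y0 0))
      by (rewrite A0', B0; exact (eq_sym gB_hits)).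
    injection E as E1 E2. auto. }
  set (r0 := Rmin rA rB).
  assert (Hr0 : 0 < r0 /\ r0 <= rA /\ r0 <= rB)
    by (split; [apply Rmin_pos|split; [apply Rmin_l|apply Rmin_r]]; auto).
  destruct (transversal_intersection a1 a2 b1 b2 da1 da2 db1 db2 y0 y0 r0 (proj1 Hr0)
              (fun y e Hy He => FamA y e ltac:(lra) ltac:(lra))
              (fun y e Hy He => FamB y e ltac:(lra) ltac:(lra))
              CA1 CA2 EA2 CB1 CB2 EB2 ltac:(rewrite EA1, EB1; exact Hne)
              (proj1 Hbase) (proj2 Hbase))
    as [eps1 [dA [dB [y1 [y2 [He1 [HdA [HdB [Y10 HC]]]]]]]]].
  exists eps1, dA, dB, y1, y2, (fun e => (a1 (y1 e) e, a2 (y1 e) e)).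
  split; [lra|]. split; [lra|]. split; [lra|]. split; [rewrite Y10; exact A0'|].
  intros e He. destruct (HC e He) as [Hy1 [Hy2 [Eab1 [Eab2 [Huniq Hc]]]]].
  destruct (CurA (y1 e) e ltac:(lra) ltac:(lra)) as [ItA [PyA IntA]].
  destruct (CurB (y2 e) e ltac:(lra) ltac:(lra)) as [ItB [PyB IntB]].
  destruct (FamA (y1 e) e ltac:(lra) ltac:(lra)) as [_ [_ [C1 C2]]].
  do 4 (split; [auto|]).
  split; [exact (eq_sym ItA)|]. split; [rewrite Eab1, Eab2; exact (eq_sym ItB)|].
  do 2 (split; [auto|]). split.
  - intros y y' Hy Hy' E.
    destruct (CurA y e ltac:(lra) ltac:(lra)) as [ItA' _].
    destruct (CurB y' e ltac:(lra) ltac:(lra)) as [ItB' _].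
    assert (E' : (a1 y e, a2 y e) = (b1 y' e, b2 y' e)) by (rewrite <- ItA', <- ItB'; exact E).
    injection E' as F1 F2. destruct (Huniq y y' Hy Hy' F1 F2) as [-> _]. exact ItA'.
  - split; [apply (continuous_comp_cont2_e a1 y1 e)|apply (continuous_comp_cont2_e a2 y1 e)]; auto.
Qed.

Lemma symmetric_orbit_continuation : exists eps0 dA dB (U : R * R -> Prop) (pe : R -> R * R),
  0 < eps0 /\ 0 < dA /\ 0 < dB /\ locally pstar U /\ pe 0 = pstar /\
  forall e, Rabs e < eps0 ->
    continuous pe e /\ U (pe e) /\
    (exists y, Rabs (y - y0) < dA /\ pe e = Nat.iter nA (Te e) (gamma lambda gA y)) /\
    (exists y, Rabs (y - y0) < dB /\ pe e = Nat.iter nB (Te e) (gamma lambda gB y)) /\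
    (forall p, U p ->
       (exists y, Rabs (y - y0) < dA /\ p = Nat.iter nA (Te e) (gamma lambda gA y)) ->
       (exists y, Rabs (y - y0) < dB /\ p = Nat.iter nB (Te e) (gamma lambda gB y)) ->
       p = pe e) /\
    sym_periodic_orbit (Te e) (Ssym f e) (inP pa pb) q (pe e).
Proof.
  destruct curves_intersection as [eps1 [dA [dB [y1 [y2 [pe [He1 [HdA [HdB [pe_base Hpe]]]]]]]]]].
  destruct (Hpe 0 ltac:(rewrite Rabs_R0; lra)) as [_ [_ [_ [_ [_ [_ [_ [_ [_ [Pc1 Pc2]]]]]]]]]].
  destruct (perturbed_orbit_interior d pa pb lambda f y0 q l r k0 lambda_smooth lambda_pos
              lambda_sum f_smooth Py0 Hper pe Pc1 Pc2 pe_base) as [D1 [HD1 HI]].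
  destruct (perturbed_orbit_distinct d pa pb lambda f y0 q l r k0 lambda_smooth lambda_pos
              lambda_sum f_smooth Py0 Hper pe Pc1 Pc2 pe_base) as [D2 [HD2 HD]].
  set (eps0 := Rmin eps1 (Rmin D1 D2)).
  assert (Heps0 : 0 < eps0 /\ eps0 <= eps1 /\ eps0 <= D1 /\ eps0 <= D2).
  { unfold eps0. pose proof (Rmin_l eps1 (Rmin D1 D2)). pose proof (Rmin_r eps1 (Rmin D1 D2)).
    pose proof (Rmin_l D1 D2). pose proof (Rmin_r D1 D2).
    repeat split; try lra. repeat apply Rmin_pos; lra. }
  (* Uniqueness is already enforced by the parameter windows [dA], [dB], so [U] can be the
     whole plane. *)
  exists eps0, dA, dB, (fun _ => True), pe.
  split; [lra|]. split; [lra|]. split; [lra|]. split; [apply filter_true|]. split; [exact pe_base|].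
  intros e He.
  destruct (Hpe e ltac:(lra)) as [Hy1 [Hy2 [PyA [PyB [PeA [PeB [IntA [IntB [Huniq [C1 C2]]]]]]]]]].
  split; [apply continuous_pair; auto|]. split; [exact I|].
  split; [exists (y1 e); auto|]. split; [exists (y2 e); auto|]. split.
  - intros p _ [y [Hy Ep]] [y' [Hy' Ep']]. rewrite Ep. apply (Huniq y y'); auto. congruence.
  - destruct Hper as [[_ [Hq _]] _].
    apply (curves_meet_on_sym_orbit d lambda pa pb f lambda_pos lambda_sum f_periodic f_odd e q
             gA gB nA nB (y1 e) (y2 e)); auto.
    + intros k Hk. apply HI; auto. lra.
    + intros k Hk. apply HD; auto. lra.
Qed.

End Main.

Theorem mainTheorem12
  (d : nat) (pa pb : Rbar) (lambda : nat -> R -> R) (f : R -> R)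
  (y0 : R) (q : nat) (l r : R) (gA gB : curve) (nA nB : nat)
  (yA yB : R) (pstar : R * R) :
  (2 <= d)%nat ->
  Rbar_lt pa pb ->
  (forall i, (i < d)%nat -> smooth_on (inP pa pb) (lambda i)) ->
  (forall i y, (i < d)%nat -> inP pa pb y -> 0 < lambda i y) ->
  (forall y, inP pa pb y -> psum (fun i => lambda i y) d = 1) ->
  (forall n x, ex_derive_n f n x) ->
  (forall x, f (x + 1) = f x) ->
  (forall x, f (- x) = - f x) ->
  inP pa pb y0 ->
  periodic_interval d lambda y0 q l r ->
  valid_curve d gA -> valid_curve d gB ->
  Z.abs (jval gA nA - jval gB nB) = Z.of_nat q ->
  inP pa pb yA -> inP pa pb yB ->
  (exists k, (k < q)%nat /\ pstar = Nat.iter k (T d lambda f 0) ((l + r) / 2, y0)) ->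
  Nat.iter nA (T d lambda f 0) (gamma lambda gA yA) = pstar ->
  Nat.iter nB (T d lambda f 0) (gamma lambda gB yB) = pstar ->
  (forall k, (k < nA)%nat -> exists i delta, 0 < delta /\
     forall y e, Rabs (y - yA) < delta -> Rabs e < delta ->
       in_elem d lambda i (Nat.iter k (T d lambda f e) (gamma lambda gA y))) ->
  (forall k, (k < nB)%nat -> exists i delta, 0 < delta /\
     forall y e, Rabs (y - yB) < delta -> Rabs e < delta ->
       in_elem d lambda i (Nat.iter k (T d lambda f e) (gamma lambda gB y))) ->
  (exists uA1 uA2 uB1 uB2,
     is_derive (fun y => fst (Nat.iter nA (T d lambda f 0) (gamma lambda gA y))) yA uA1 /\
     is_derive (fun y => snd (Nat.iter nA (T d lambda f 0) (gamma lambda gA y))) yA uA2 /\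
     is_derive (fun y => fst (Nat.iter nB (T d lambda f 0) (gamma lambda gB y))) yB uB1 /\
     is_derive (fun y => snd (Nat.iter nB (T d lambda f 0) (gamma lambda gB y))) yB uB2 /\
     (forall s t, s * uA1 + t * uB1 = 0 -> s * uA2 + t * uB2 = 0 -> s = 0 /\ t = 0)) ->
  exists eps0 dA dB (U : R * R -> Prop) (pe : R -> R * R),
    0 < eps0 /\ 0 < dA /\ 0 < dB /\ locally pstar U /\
    pe 0 = pstar /\
    forall e, Rabs e < eps0 ->
      continuous pe e /\
      U (pe e) /\
      (exists y, Rabs (y - yA) < dA /\ pe e = Nat.iter nA (T d lambda f e) (gamma lambda gA y)) /\
      (exists y, Rabs (y - yB) < dB /\ pe e = Nat.iter nB (T d lambda f e) (gamma lambda gB y)) /\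
      (forall p, U p ->
         (exists y, Rabs (y - yA) < dA /\ p = Nat.iter nA (T d lambda f e) (gamma lambda gA y)) ->
         (exists y, Rabs (y - yB) < dB /\ p = Nat.iter nB (T d lambda f e) (gamma lambda gB y)) ->
         p = pe e) /\
      sym_periodic_orbit (T d lambda f e) (Ssym f e) (inP pa pb) q (pe e).
Proof.
  intros _ _ Hsm Hpos Hsum Hf Hfper Hfodd Py0 Hper HvA HvB Hj _ _ [k0 [_ Ep]]
    HA0 HB0 HlocA HlocB Hder.
  assert (Ey : forall g n y, Nat.iter n (T d lambda f 0) (gamma lambda g y) = pstar -> y = y0).
  { intros g n y E. rewrite <- (unperturbed_height d lambda f g n y), E, Ep, (T0_iter d lambda f).
    reflexivity. }
  assert (yA = y0) as -> by exact (Ey gA nA yA HA0).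
  assert (yB = y0) as -> by exact (Ey gB nB yB HB0).
  subst pstar.
  exact (symmetric_orbit_continuation d pa pb lambda f y0 q l r k0 gA gB nA nB Hsm Hpos Hsum Hf Hfper Hfodd
           Py0 Hper HvA HvB Hj HA0 HB0 HlocA HlocB Hder).
Qed.
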